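(* For $|q|<1$ and nonzero complex $a,b,c$, $$\begin{aligned}&(q;q^2)_\infty^2\big([a,b,-c;q]_\infty+[a,-b,c;q]_\infty+[-a,b,c;q]_\infty\big)\\&\quad=(a,q/a;q)_\infty[bc,bq/c;q^2]_\infty+(b,q/b;q)_\infty[ac,aq/c;q^2]_\infty+(c,q/c;q)_\infty[ab,aq/b;q^2]_\infty.\end{aligned}$$
   Context: $(z;p)_\infty=\prod_{k\ge0}(1-zp^k)$, $(z_1,\dots,z_n;p)_\infty=\prod_j(z_j;p)_\infty$, $[z;p]_\infty=(z,p/z;p)_\infty$, and $[z_1,\dots,z_n;p]_\infty=\prod_j[z_j;p]_\infty$. *)

From Stdlib Require Import Reals ClassicalEpsilon.
Open Scope R_scope.

Record Cplx : Type := mkC { Re : R; Im : R }.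

Definition C0 : Cplx := mkC 0 0.
Definition C1 : Cplx := mkC 1 0.
Definition Cadd (z w : Cplx) : Cplx := mkC (Re z + Re w) (Im z + Im w).
Definition Copp (z : Cplx) : Cplx := mkC (- Re z) (- Im z).
Definition Csub (z w : Cplx) : Cplx := Cadd z (Copp w).
Definition Cmul (z w : Cplx) : Cplx :=
  mkC (Re z * Re w - Im z * Im w) (Re z * Im w + Im z * Re w).
Definition Cinv (z : Cplx) : Cplx :=
  let d := Re z * Re z + Im z * Im z in mkC (Re z / d) (- Im z / d).
Definition Cdiv (z w : Cplx) : Cplx := Cmul z (Cinv w).
Definition Cmod (z : Cplx) : R := sqrt (Re z * Re z + Im z * Im z).
Fixpoint Cpow (z : Cplx) (n : nat) : Cplx :=
  match n with O => C1 | S m => Cmul z (Cpow z m) end.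

Definition C_cv (u : nat -> Cplx) (l : Cplx) : Prop :=
  forall eps : R, eps > 0 -> exists N : nat, forall n : nat,
    (n >= N)%nat -> Cmod (Csub (u n) l) < eps.

Fixpoint qpoch_part (z p : Cplx) (n : nat) : Cplx :=
  match n with
  | O => C1
  | S m => Cmul (qpoch_part z p m) (Csub C1 (Cmul z (Cpow p m)))
  end.

(* (z;p)_inf := the limit of the partial products (it exists for |p|<1). *)
Definition qpoch (z p : Cplx) : Cplx :=
  epsilon (inhabits C0) (fun l => C_cv (qpoch_part z p) l).

(* [z;p]_inf := (z, p/z; p)_inf *)
Definition theta (z p : Cplx) : Cplx := Cmul (qpoch z p) (qpoch (Cdiv p z) p).

From Stdlib Require Import Reals Bool Lra Lia Psatz ZArith List Permutation ClassicalEpsilon Classical.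
From Coquelicot Require Complex.
Open Scope R_scope.

(* The identity follows from the two-variable relation

     (K)   (q;q^2)_oo^2 ([b;q]_oo [-c;q]_oo + [-b;q]_oo [c;q]_oo)
               = 2 [bc;q^2]_oo [bq/c;q^2]_oo

   applied to the pairs (b,c), (a,c) and (a,b): multiplying the instance for
   (b,c) by [a;q]_oo = (a,q/a;q)_oo and adding the three instances, each of
   the products [a][b][-c], [a][-b][c], [-a][b][c] appears twice.

   (K) comes from the Jacobi triple product.  For finite n the product
   (z;p)_n (p/z;p)_n is the sum over |k| <= n of the theta coefficients
   p^(k(k-1)/2) (-z)^k weighted by the centred Gaussian binomials
   [2n, n+k]_p (finite triple product, by induction on n).  The product of two
   such sums is a sum over the box [-n,n]^2; the weights tend to 1/(p;p)_oo
   and the coefficients decay like 4^-(|j|+|k|), so a dominated convergence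
   argument on boxes identifies the limits.  The substitution
   (m,l) |-> (m+l, m-l) turns the box sum for the left side of (K) into twice
   the box sum for the right side up to a vanishing tail, and
   (q;q)_oo = (q;q^2)_oo (q^2;q^2)_oo concludes. *)

Lemma Cplx_ext (z w : Cplx) : Re z = Re w -> Im z = Im w -> z = w.
Proof. destruct z, w; simpl; intros; subst; reflexivity. Qed.

Lemma Cring_theory : ring_theory C0 C1 Cadd Cmul Csub Copp (@eq Cplx).
Proof.
  constructor; intros; apply Cplx_ext; destruct x; try destruct y; try destruct z;
  unfold Cadd, Cmul, Csub, Copp, C0, C1; simpl; ring.
Qed.

Lemma Cnorm2_neq0 (z : Cplx) : z <> C0 -> Re z * Re z + Im z * Im z <> 0.
Proof.
  intros H Hd; apply H; destruct z as [x y]; simpl in *.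
  assert (x = 0) by nra. assert (y = 0) by nra. subst. reflexivity.
Qed.

Lemma Cfield_theory : field_theory C0 C1 Cadd Cmul Csub Copp Cdiv Cinv (@eq Cplx).
Proof.
  constructor.
  - exact Cring_theory.
  - intro H. injection H. lra.
  - reflexivity.
  - intros z Hz. apply Cnorm2_neq0 in Hz. destruct z as [x y]; simpl in *.
    apply Cplx_ext; unfold Cinv, Cmul, C1; simpl; field; auto.
Qed.

Add Field Cfield : Cfield_theory.

Definition toC (z : Cplx) : Complex.C := (Re z, Im z).

Lemma Cmod_toC z : Cmod z = Complex.Cmod (toC z).
Proof. unfold Cmod, Complex.Cmod, toC; simpl. f_equal; ring. Qed.

Lemma Cmod_ge0 z : 0 <= Cmod z.
Proof. rewrite Cmod_toC. apply Complex.Cmod_ge_0. Qed.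

Lemma Cmod_mul z w : Cmod (Cmul z w) = Cmod z * Cmod w.
Proof. rewrite !Cmod_toC. exact (Complex.Cmod_mult (toC z) (toC w)). Qed.

Lemma Cmod_tri z w : Cmod (Cadd z w) <= Cmod z + Cmod w.
Proof. rewrite !Cmod_toC. exact (Complex.Cmod_triangle (toC z) (toC w)). Qed.

Lemma Cmod_opp z : Cmod (Copp z) = Cmod z.
Proof. rewrite !Cmod_toC. exact (Complex.Cmod_opp (toC z)). Qed.

Lemma Cmod_C0 : Cmod C0 = 0.
Proof. unfold Cmod, C0; simpl. replace (0*0+0*0) with 0 by ring. apply sqrt_0. Qed.

Lemma Cmod_C1 : Cmod C1 = 1.
Proof. unfold Cmod, C1; simpl. replace (1*1+0*0) with 1 by ring. apply sqrt_1. Qed.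

Lemma Cmod_eq0 z : Cmod z = 0 -> z = C0.
Proof.
  rewrite Cmod_toC. intro H. apply Complex.Cmod_eq_0 in H. unfold toC in H.
  injection H; intros. apply Cplx_ext; simpl; auto.
Qed.

Lemma Cmod_pos z : z <> C0 -> 0 < Cmod z.
Proof. intro H. destruct (Cmod_ge0 z); auto. exfalso; apply H, Cmod_eq0; auto. Qed.

Lemma Cmod_sub z w : Cmod (Csub z w) <= Cmod z + Cmod w.
Proof. unfold Csub. rewrite <- (Cmod_opp w). apply Cmod_tri. Qed.

Lemma Cmod_sub_sym z w : Cmod (Csub z w) = Cmod (Csub w z).
Proof. replace (Csub z w) with (Copp (Csub w z)) by ring. apply Cmod_opp. Qed.

Lemma Cmod_sub_tri z w u : Cmod (Csub z w) <= Cmod (Csub z u) + Cmod (Csub u w).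
Proof. replace (Csub z w) with (Cadd (Csub z u) (Csub u w)) by ring. apply Cmod_tri. Qed.

Lemma Cmod_rev z w : Cmod z - Cmod w <= Cmod (Csub z w).
Proof.
  assert (H := Cmod_tri (Csub z w) w). replace (Cadd (Csub z w) w) with z in H by ring. lra.
Qed.

Lemma Cmod_pow z n : Cmod (Cpow z n) = Cmod z ^ n.
Proof. induction n; simpl. apply Cmod_C1. rewrite Cmod_mul, IHn; auto. Qed.

Lemma Cmod_inv z : z <> C0 -> Cmod (Cinv z) = / Cmod z.
Proof.
  intro H. assert (Hp := Cmod_pos z H).
  assert (E : Cmul (Cinv z) z = C1) by (field; auto).
  assert (E2 := f_equal Cmod E). rewrite Cmod_mul, Cmod_C1 in E2.
  field_simplify_eq; [|lra]. lra.
Qed.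

Lemma Cmod_Re z : Rabs (Re z) <= Cmod z.
Proof. unfold Cmod. rewrite <- sqrt_Rsqr_abs. apply sqrt_le_1_alt. unfold Rsqr. nra. Qed.

Lemma Cmod_Im z : Rabs (Im z) <= Cmod z.
Proof. unfold Cmod. rewrite <- sqrt_Rsqr_abs. apply sqrt_le_1_alt. unfold Rsqr. nra. Qed.

Lemma Cmod_mk x y : Cmod (mkC x y) <= Rabs x + Rabs y.
Proof.
  replace (mkC x y) with (Cadd (mkC x 0) (mkC 0 y)) by (apply Cplx_ext; simpl; ring).
  eapply Rle_trans; [apply Cmod_tri|]. unfold Cmod; simpl.
  apply Rplus_le_compat; rewrite <- sqrt_Rsqr_abs; apply sqrt_le_1_alt; unfold Rsqr; nra.
Qed.

Lemma Cmod_lt1_sq q : Cmod q < 1 -> Cmod (Cmul q q) < 1.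
Proof. intro H. rewrite Cmod_mul. assert (0 <= Cmod q) by apply Cmod_ge0. nra. Qed.

Lemma C1_nz : C1 <> C0.
Proof. intro E; injection E; lra. Qed.

Lemma two_nz : Cadd C1 C1 <> C0.
Proof. intro E. injection E. lra. Qed.

Lemma Cmul_nz x y : x <> C0 -> y <> C0 -> Cmul x y <> C0.
Proof.
  intros Hx Hy E. assert (E2 := f_equal Cmod E). rewrite Cmod_mul, Cmod_C0 in E2.
  apply Cmod_pos in Hx. apply Cmod_pos in Hy. nra.
Qed.

Lemma Cinv_nz x : x <> C0 -> Cinv x <> C0.
Proof.
  intros Hx E. assert (E2 : Cmul (Cinv x) x = C0) by (rewrite E; ring).
  replace (Cmul (Cinv x) x) with C1 in E2 by (field; auto). apply C1_nz; auto.
Qed.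

Lemma Cdiv_nz x y : x <> C0 -> y <> C0 -> Cdiv x y <> C0.
Proof. intros. unfold Cdiv. apply Cmul_nz; auto. apply Cinv_nz; auto. Qed.

Lemma Copp_nz x : x <> C0 -> Copp x <> C0.
Proof. intros Hx E. apply Hx. replace x with (Copp (Copp x)) by ring. rewrite E. ring. Qed.

Lemma Cpow_nz z n : z <> C0 -> Cpow z n <> C0.
Proof. intro H. induction n; simpl. apply C1_nz. apply Cmul_nz; auto. Qed.

Lemma Cpow_add z m n : Cpow z (m + n) = Cmul (Cpow z m) (Cpow z n).
Proof. induction m; simpl. ring. rewrite IHm. ring. Qed.

Lemma Cpow_mul z w n : Cpow (Cmul z w) n = Cmul (Cpow z n) (Cpow w n).
Proof. induction n; simpl. ring. rewrite IHn. ring. Qed.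

Lemma Cpow_inv y n : y <> C0 -> Cpow (Cinv y) n = Cinv (Cpow y n).
Proof.
  intro Hy. induction n; simpl.
  - apply Cplx_ext; unfold Cinv, C1; simpl; field.
  - rewrite IHn. field. split; auto. apply Cpow_nz; auto.
Qed.

Definition zpow (x : Cplx) (k : Z) : Cplx :=
  match k with
  | Z0 => C1
  | Zpos p => Cpow x (Pos.to_nat p)
  | Zneg p => Cinv (Cpow x (Pos.to_nat p))
  end.

Lemma zpow_nat x n : zpow x (Z.of_nat n) = Cpow x n.
Proof. destruct n. reflexivity. simpl. rewrite SuccNat2Pos.id_succ. reflexivity. Qed.

Lemma zpow_1 x : zpow x 1 = x.
Proof. simpl. ring. Qed.

Lemma zpow_diff x a b : x <> C0 ->
  zpow x (Z.of_nat a - Z.of_nat b) = Cdiv (Cpow x a) (Cpow x b).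
Proof.
  intro Hx. destruct (le_lt_dec b a) as [H|H].
  - replace (Z.of_nat a - Z.of_nat b)%Z with (Z.of_nat (a - b)) by lia.
    rewrite zpow_nat. replace a with (b + (a - b))%nat at 2 by lia.
    rewrite Cpow_add. field. apply Cpow_nz; auto.
  - replace (Z.of_nat a - Z.of_nat b)%Z with (Z.neg (Pos.of_nat (b - a))).
    + simpl. rewrite Nat2Pos.id by lia. replace b with (a + (b - a))%nat at 2 by lia.
      rewrite Cpow_add. field. split; apply Cpow_nz; auto.
    + rewrite <- Pos2Z.opp_pos, <- positive_nat_Z, Nat2Pos.id by lia. lia.
Qed.

Lemma zpow_split x k : x <> C0 ->
  zpow x k = Cdiv (Cpow x (Z.to_nat k)) (Cpow x (Z.to_nat (- k))).
Proof.
  intro Hx. replace k with (Z.of_nat (Z.to_nat k) - Z.of_nat (Z.to_nat (-k)))%Z at 1 by lia.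
  apply zpow_diff; auto.
Qed.

Lemma zpow_nz x k : x <> C0 -> zpow x k <> C0.
Proof. intro Hx. rewrite zpow_split by auto. apply Cdiv_nz; apply Cpow_nz; auto. Qed.

Lemma zpow_add x i j : x <> C0 -> zpow x (i + j) = Cmul (zpow x i) (zpow x j).
Proof.
  intro Hx.
  replace (i + j)%Z with (Z.of_nat (Z.to_nat i + Z.to_nat j)
                          - Z.of_nat (Z.to_nat (-i) + Z.to_nat (-j)))%Z by lia.
  rewrite zpow_diff, !(zpow_split x i), !(zpow_split x j), !Cpow_add by auto.
  field. split; apply Cpow_nz; auto.
Qed.

Lemma zpow_mul x y k : x <> C0 -> y <> C0 ->
  zpow (Cmul x y) k = Cmul (zpow x k) (zpow y k).
Proof.
  intros Hx Hy. rewrite !(zpow_split _ k) by (auto; apply Cmul_nz; auto).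
  rewrite !Cpow_mul. field. split; apply Cpow_nz; auto.
Qed.

Lemma zpow_opp x k : x <> C0 -> zpow x (- k) = Cinv (zpow x k).
Proof.
  intro Hx. assert (H := zpow_add x k (-k) Hx). rewrite Z.add_opp_diag_r in H.
  assert (Hk := zpow_nz x k Hx).
  replace (zpow x (-k)) with (Cmul (Cinv (zpow x k)) (Cmul (zpow x k) (zpow x (-k))))
    by (field; auto).
  rewrite <- H. simpl. field. auto.
Qed.

Lemma zpow_div x y k : x <> C0 -> y <> C0 ->
  zpow (Cdiv x y) k = Cmul (zpow x k) (zpow y (-k)).
Proof.
  intros Hx Hy. unfold Cdiv. rewrite zpow_mul by (auto; apply Cinv_nz; auto).
  rewrite zpow_opp, !(zpow_split _ k), !Cpow_inv by (auto; apply Cinv_nz; auto).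
  field. repeat split; try apply Cpow_nz; auto. apply C1_nz.
Qed.

Lemma zpow_sq x k : x <> C0 -> zpow (Cmul x x) k = zpow x (2 * k).
Proof.
  intro Hx. rewrite zpow_mul by auto. replace (2 * k)%Z with (k + k)%Z by lia.
  rewrite zpow_add; auto.
Qed.

Lemma Cmod_zpow x k : x <> C0 -> Cmod (zpow x k) = powerRZ (Cmod x) k.
Proof.
  intro Hx. destruct k; simpl. apply Cmod_C1. apply Cmod_pow.
  rewrite Cmod_inv by (apply Cpow_nz; auto). rewrite Cmod_pow. reflexivity.
Qed.

Lemma Zeven_nat n : Z.even (Z.of_nat n) = Nat.even n.
Proof.
  induction n. reflexivity.
  rewrite Nat2Z.inj_succ, Z.even_succ, Nat.even_succ, <- Z.negb_even, <- Nat.negb_even, IHn.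
  reflexivity.
Qed.

Lemma zpow_m1 k : zpow (Copp C1) k = if Z.even k then C1 else Copp C1.
Proof.
  assert (H : forall n, Cpow (Copp C1) n = if Nat.even n then C1 else Copp C1).
  { induction n. reflexivity. simpl Cpow. rewrite IHn, Nat.even_succ, <- Nat.negb_even.
    destruct (Nat.even n); simpl; ring. }
  destruct k; simpl. reflexivity.
  - rewrite H, <- Zeven_nat, positive_nat_Z. reflexivity.
  - rewrite H, <- Zeven_nat, positive_nat_Z.
    destruct p; simpl; field; (apply C1_nz || (intro E; injection E; lra)).
Qed.

Lemma zpow_Copp x k : x <> C0 -> zpow (Copp x) k = Cmul (zpow (Copp C1) k) (zpow x k).
Proof.
  intro Hx. replace (Copp x) with (Cmul (Copp C1) x) by ring.
  apply zpow_mul; auto. apply Copp_nz, C1_nz.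
Qed.

Definition tri (k : Z) : Z := (k * (k - 1)) / 2.

Lemma tri_double k : (2 * tri k = k * (k - 1))%Z.
Proof.
  unfold tri. destruct (Z.Even_or_Odd k) as [[j Hj]|[j Hj]]; subst.
  - replace (2 * j * (2 * j - 1))%Z with ((j * (2 * j - 1)) * 2)%Z by ring.
    rewrite Z.div_mul by lia. ring.
  - replace ((2 * j + 1) * (2 * j + 1 - 1))%Z with ((j * (2 * j + 1)) * 2)%Z by ring.
    rewrite Z.div_mul by lia. ring.
Qed.

Lemma tri_succ k : tri (k + 1) = (tri k + k)%Z.
Proof. assert (H1 := tri_double k). assert (H2 := tri_double (k + 1)). nia. Qed.

Lemma tri_opp k : tri (- k) = (tri k + k)%Z.
Proof. assert (H1 := tri_double k). assert (H2 := tri_double (- k)). nia. Qed.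

Lemma tri_plus m l : tri (m + l) = (tri m + tri l + m * l)%Z.
Proof. assert (H1 := tri_double m). assert (H2 := tri_double l). assert (H3 := tri_double (m + l)). nia. Qed.

Lemma tri_minus m l : tri (m - l) = (tri m + tri l + l + - (m * l))%Z.
Proof. assert (H1 := tri_double m). assert (H2 := tri_double l). assert (H3 := tri_double (m - l)). nia. Qed.

Lemma tri_ge0 k : (0 <= tri k)%Z.
Proof. assert (H := tri_double k). nia. Qed.

Lemma cv_unique u l1 l2 : C_cv u l1 -> C_cv u l2 -> l1 = l2.
Proof.
  intros H1 H2.
  assert (Hz : Cmod (Csub l1 l2) = 0).
  { apply Rle_antisym; [|apply Cmod_ge0].
    apply Rnot_lt_le. intro Hp.
    destruct (H1 (Cmod (Csub l1 l2) / 2)) as [N1 HN1]; [lra|].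
    destruct (H2 (Cmod (Csub l1 l2) / 2)) as [N2 HN2]; [lra|].
    specialize (HN1 (N1 + N2)%nat ltac:(lia)). specialize (HN2 (N1 + N2)%nat ltac:(lia)).
    assert (T := Cmod_sub_tri l1 l2 (u (N1+N2)%nat)).
    rewrite (Cmod_sub_sym l1 (u _)) in T. lra. }
  apply Cmod_eq0 in Hz. replace l1 with (Cadd (Csub l1 l2) l2) by ring. rewrite Hz. ring.
Qed.

Lemma cv_const l : C_cv (fun _ => l) l.
Proof.
  intros e He. exists 0%nat. intros. replace (Csub l l) with C0 by ring. rewrite Cmod_C0. lra.
Qed.

Lemma cv_ext_ev u v l N0 : (forall n, (n >= N0)%nat -> u n = v n) -> C_cv u l -> C_cv v l.
Proof.
  intros E H e He. destruct (H e He) as [N HN]. exists (N + N0)%nat. intros.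
  rewrite <- E by lia. apply HN; lia.
Qed.

Lemma cv_ext u v l : (forall n, u n = v n) -> C_cv u l -> C_cv v l.
Proof. intros E. apply (cv_ext_ev u v l 0). intros; auto. Qed.

Lemma cv_add u v l m : C_cv u l -> C_cv v m -> C_cv (fun n => Cadd (u n) (v n)) (Cadd l m).
Proof.
  intros Hu Hv e He.
  destruct (Hu (e/2)) as [N1 H1]; [lra|]. destruct (Hv (e/2)) as [N2 H2]; [lra|].
  exists (N1 + N2)%nat. intros n Hn.
  replace (Csub (Cadd (u n) (v n)) (Cadd l m)) with (Cadd (Csub (u n) l) (Csub (v n) m)) by ring.
  eapply Rle_lt_trans; [apply Cmod_tri|].
  specialize (H1 n ltac:(lia)); specialize (H2 n ltac:(lia)). lra.
Qed.

Lemma cv_opp u l : C_cv u l -> C_cv (fun n => Copp (u n)) (Copp l).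
Proof.
  intros Hu e He. destruct (Hu e He) as [N HN]. exists N. intros.
  replace (Csub (Copp (u n)) (Copp l)) with (Copp (Csub (u n) l)) by ring.
  rewrite Cmod_opp. auto.
Qed.

Lemma cv_sub u v l m : C_cv u l -> C_cv v m -> C_cv (fun n => Csub (u n) (v n)) (Csub l m).
Proof. intros Hu Hv. apply cv_add; auto. apply cv_opp; auto. Qed.

Lemma cv_bounded u l : C_cv u l -> exists M, 0 <= M /\ forall n, Cmod (u n) <= M.
Proof.
  intros Hu. destruct (Hu 1) as [N HN]; [lra|].
  assert (Hinit : forall K, exists M, 0 <= M /\ forall n, (n < K)%nat -> Cmod (u n) <= M).
  { induction K. exists 0. split; [lra|]. intros; lia.
    destruct IHK as [M [HM0 HM]]. exists (Rmax M (Cmod (u K))). split.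
    - eapply Rle_trans; [apply HM0|apply Rmax_l].
    - intros n Hn. destruct (Nat.eq_dec n K). subst; apply Rmax_r.
      eapply Rle_trans; [apply HM; lia|apply Rmax_l]. }
  destruct (Hinit N) as [M [HM0 HM]]. exists (Rmax M (Cmod l + 1)). split.
  - eapply Rle_trans; [apply HM0|apply Rmax_l].
  - intros n. destruct (le_lt_dec N n).
    + specialize (HN n l0). assert (T := Cmod_tri (Csub (u n) l) l).
      replace (Cadd (Csub (u n) l) l) with (u n) in T by ring.
      eapply Rle_trans; [|apply Rmax_r]. lra.
    + eapply Rle_trans; [apply HM; auto|apply Rmax_l].
Qed.

Lemma cv_mul u v l m : C_cv u l -> C_cv v m -> C_cv (fun n => Cmul (u n) (v n)) (Cmul l m).
Proof.
  intros Hu Hv e He.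
  destruct (cv_bounded u l Hu) as [M [HM0 HM]].
  set (e1 := e / (2 * (M + 1))). set (e2 := e / (2 * (Cmod m + 1))).
  assert (He1 : 0 < e1) by (unfold e1; apply Rdiv_lt_0_compat; lra).
  assert (Hm := Cmod_ge0 m).
  assert (He2 : 0 < e2) by (unfold e2; apply Rdiv_lt_0_compat; lra).
  destruct (Hv e1 He1) as [N1 H1]. destruct (Hu e2 He2) as [N2 H2].
  exists (N1 + N2)%nat. intros n Hn.
  replace (Csub (Cmul (u n) (v n)) (Cmul l m))
    with (Cadd (Cmul (u n) (Csub (v n) m)) (Cmul m (Csub (u n) l))) by ring.
  eapply Rle_lt_trans; [apply Cmod_tri|]. rewrite !Cmod_mul.
  specialize (H1 n ltac:(lia)); specialize (H2 n ltac:(lia)). specialize (HM n).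
  assert (A1 : Cmod (u n) * Cmod (Csub (v n) m) <= M * e1).
  { apply Rmult_le_compat; auto using Cmod_ge0; lra. }
  assert (A2 : Cmod m * Cmod (Csub (u n) l) <= Cmod m * e2).
  { apply Rmult_le_compat_l; auto; lra. }
  assert (B1 : M * e1 < e / 2).
  { unfold e1. apply Rmult_lt_reg_r with (2 * (M + 1)); [lra|].
    field_simplify; [|lra]. nra. }
  assert (B2 : Cmod m * e2 < e / 2).
  { unfold e2. apply Rmult_lt_reg_r with (2 * (Cmod m + 1)); [lra|].
    field_simplify; [|lra]. nra. }
  lra.
Qed.

Lemma cv_inv u l : l <> C0 -> C_cv u l -> C_cv (fun n => Cinv (u n)) (Cinv l).
Proof.
  intros Hl Hu e He. assert (Hp := Cmod_pos l Hl).
  set (d := Rmin (Cmod l / 2) (e * Cmod l * Cmod l / 2)).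
  assert (Hd : 0 < d).
  { unfold d; apply Rmin_pos; [lra|].
    assert (0 < e * Cmod l * Cmod l) by (apply Rmult_lt_0_compat; nra). lra. }
  destruct (Hu d Hd) as [N HN]. exists N. intros n Hn. specialize (HN n Hn).
  assert (Hd1 : d <= Cmod l / 2) by apply Rmin_l.
  assert (Hd2 : d <= e * Cmod l * Cmod l / 2) by apply Rmin_r.
  assert (Hun : Cmod l / 2 <= Cmod (u n)).
  { assert (T := Cmod_rev l (u n)). rewrite Cmod_sub_sym in T. lra. }
  assert (Hu0 : u n <> C0).
  { intro E. rewrite E, Cmod_C0 in Hun. lra. }
  replace (Csub (Cinv (u n)) (Cinv l)) with (Cmul (Csub l (u n)) (Cinv (Cmul (u n) l)))
    by (field; auto).
  rewrite Cmod_mul, Cmod_inv, Cmod_mul by (apply Cmul_nz; auto).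
  rewrite Cmod_sub_sym.
  assert (0 < Cmod (u n) * Cmod l) by nra.
  apply Rmult_lt_reg_r with (Cmod (u n) * Cmod l); auto.
  field_simplify; [|lra].
  assert (e * (Cmod l / 2) * Cmod l <= e * Cmod (u n) * Cmod l).
  { apply Rmult_le_compat_r; [lra|]. apply Rmult_le_compat_l; lra. }
  nra.
Qed.

Lemma cv_comp u l f : C_cv u l ->
  (forall N, exists M, forall n, (n >= M)%nat -> (f n >= N)%nat) ->
  C_cv (fun n => u (f n)) l.
Proof.
  intros Hu Hf e He. destruct (Hu e He) as [N HN]. destruct (Hf N) as [M HM].
  exists M. intros. apply HN. apply HM; auto.
Qed.

Lemma cv_eq_of_diff u v l m : C_cv u l -> C_cv v m ->
  C_cv (fun n => Csub (u n) (v n)) C0 -> l = m.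
Proof.
  intros Hu Hv Hd. assert (H := cv_unique _ _ _ (cv_sub u v l m Hu Hv) Hd).
  replace l with (Cadd (Csub l m) m) by ring. rewrite H. ring.
Qed.

Lemma cv_of_close u v l : C_cv u l -> C_cv (fun n => Csub (u n) (v n)) C0 -> C_cv v l.
Proof.
  intros Hu Hd. replace l with (Csub l C0) by ring.
  apply (cv_ext (fun n => Csub (u n) (Csub (u n) (v n)))); [intro; ring|].
  apply cv_sub; auto.
Qed.

Lemma cv_norm_lb u l d : C_cv u l -> (forall n, d <= Cmod (u n)) -> d <= Cmod l.
Proof.
  intros Hu Hd. apply Rnot_lt_le. intro H.
  destruct (Hu (d - Cmod l)) as [N HN]; [lra|]. specialize (HN N (Nat.le_refl _)).
  assert (T := Cmod_rev (u N) l). specialize (Hd N). lra.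
Qed.

Lemma cv_cauchy u :
  (forall e, e > 0 -> exists N, forall n m, (n >= N)%nat -> (m >= N)%nat ->
     Cmod (Csub (u n) (u m)) < e) ->
  exists l, C_cv u l.
Proof.
  intros H.
  assert (HR : Cauchy_crit (fun n => Re (u n))).
  { intros e He. destruct (H e He) as [N HN]. exists N. intros n m Hn Hm.
    unfold Rdist. eapply Rle_lt_trans; [|apply (HN n m Hn Hm)].
    apply (Cmod_Re (Csub (u n) (u m))). }
  assert (HI : Cauchy_crit (fun n => Im (u n))).
  { intros e He. destruct (H e He) as [N HN]. exists N. intros n m Hn Hm.
    unfold Rdist. eapply Rle_lt_trans; [|apply (HN n m Hn Hm)].
    apply (Cmod_Im (Csub (u n) (u m))). }
  destruct (R_complete _ HR) as [x Hx]. destruct (R_complete _ HI) as [y Hy].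
  exists (mkC x y). intros e He.
  destruct (Hx (e/2)) as [N1 H1]; [lra|]. destruct (Hy (e/2)) as [N2 H2]; [lra|].
  exists (N1 + N2)%nat. intros n Hn.
  specialize (H1 n ltac:(lia)); specialize (H2 n ltac:(lia)). unfold Rdist in *.
  replace (Csub (u n) (mkC x y)) with (mkC (Re (u n) - x) (Im (u n) - y))
    by (apply Cplx_ext; simpl; ring).
  eapply Rle_lt_trans; [apply Cmod_mk|]. lra.
Qed.

Lemma cv_geometric_steps u C r : 0 <= C -> 0 <= r < 1 ->
  (forall n, Cmod (Csub (u (S n)) (u n)) <= C * r ^ n) -> exists l, C_cv u l.
Proof.
  intros HC Hr Hstep. apply cv_cauchy.
  assert (Htel : forall n k, Cmod (Csub (u (n + k)%nat) (u n)) <= C * r ^ n / (1 - r)).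
  { intros n k.
    assert (Hk : Cmod (Csub (u (n + k)%nat) (u n)) <= C * r ^ n * (1 - r ^ k) / (1 - r)).
    { induction k.
      - rewrite Nat.add_0_r. replace (Csub (u n) (u n)) with C0 by ring.
        rewrite Cmod_C0, pow_O. replace (C * r ^ n * (1 - 1) / (1 - r)) with 0 by (field; lra). lra.
      - eapply Rle_trans; [apply (Cmod_sub_tri _ _ (u (n + k)%nat))|].
        replace (n + S k)%nat with (S (n + k)) by lia.
        eapply Rle_trans; [apply Rplus_le_compat; [apply Hstep|apply IHk]|].
        rewrite pow_add. simpl. right. field. lra. }
    eapply Rle_trans; [apply Hk|]. unfold Rdiv. apply Rmult_le_compat_r.
    left; apply Rinv_0_lt_compat; lra.
    assert (0 <= r ^ k) by (apply pow_le; lra). assert (0 <= r ^ n) by (apply pow_le; lra).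
    assert (0 <= C * r ^ n) by (apply Rmult_le_pos; auto). nra. }
  intros e He.
  destruct (pow_lt_1_zero r ltac:(rewrite Rabs_pos_eq; lra) (e * (1 - r) / (2 * (C + 1))))
    as [N HN].
  { apply Rdiv_lt_0_compat; nra. }
  exists N. intros n m Hn Hm.
  assert (HrN : C * r ^ N / (1 - r) < e / 2).
  { specialize (HN N (Nat.le_refl _)). rewrite Rabs_pos_eq in HN by (apply pow_le; lra).
    apply Rmult_lt_reg_r with (1 - r); [lra|].
    replace (C * r ^ N / (1 - r) * (1 - r)) with (C * r ^ N) by (field; lra).
    assert (C * r ^ N <= (C + 1) * r ^ N) by (assert (0 <= r ^ N) by (apply pow_le; lra); nra).
    assert (E : (C + 1) * r ^ N < (C + 1) * (e * (1 - r) / (2 * (C + 1))))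
      by (apply Rmult_lt_compat_l; lra).
    replace ((C + 1) * (e * (1 - r) / (2 * (C + 1)))) with (e / 2 * (1 - r)) in E
      by (field; lra).
    lra. }
  eapply Rle_lt_trans; [apply (Cmod_sub_tri _ _ (u N))|].
  replace n with (N + (n - N))%nat by lia. replace m with (N + (m - N))%nat by lia.
  rewrite (Cmod_sub_sym (u N)).
  assert (A1 := Htel N (n - N)%nat). assert (A2 := Htel N (m - N)%nat). lra.
Qed.

Lemma pow_le1 x n : 0 <= x <= 1 -> x ^ n <= 1.
Proof. intro H. induction n; simpl. lra. assert (0 <= x ^ n) by (apply pow_le; lra). nra. Qed.

Lemma exp_le x y : x <= y -> exp x <= exp y.
Proof. intros [H|H]. left; apply exp_increasing; auto. subst; lra. Qed.

Lemma exp_le_one_minus x : 0 <= x < 1 -> exp (- (x / (1 - x))) <= 1 - x.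
Proof.
  intros Hx. rewrite exp_Ropp.
  assert (H := exp_ineq1_le (x / (1 - x))).
  assert (E : 1 + x / (1 - x) = / (1 - x)) by (field; lra).
  rewrite E in H. assert (Hp := exp_pos (x / (1 - x))).
  apply Rmult_le_reg_r with (exp (x / (1 - x))); auto.
  rewrite Rinv_l by lra. apply Rmult_le_reg_l with (/(1-x)). apply Rinv_0_lt_compat; lra.
  replace (/ (1 - x) * ((1 - x) * exp (x / (1 - x)))) with (exp (x / (1 - x))) by (field; lra).
  lra.
Qed.

Lemma qpoch_part_bounded z p n : Cmod p < 1 ->
  Cmod (qpoch_part z p n) <= exp (Cmod z / (1 - Cmod p)).
Proof.
  intros Hp. assert (Hp0 := Cmod_ge0 p). assert (Hz0 := Cmod_ge0 z).
  assert (Hn : Cmod (qpoch_part z p n) <= exp (Cmod z * (1 - Cmod p ^ n) / (1 - Cmod p))).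
  { induction n; simpl.
    - rewrite Cmod_C1. replace (Cmod z * (1 - 1) / (1 - Cmod p)) with 0 by (field; lra).
      rewrite exp_0; lra.
    - rewrite Cmod_mul.
      replace (Cmod z * (1 - Cmod p * Cmod p ^ n) / (1 - Cmod p))
        with (Cmod z * (1 - Cmod p ^ n) / (1 - Cmod p) + Cmod z * Cmod p ^ n) by (field; lra).
      rewrite exp_plus. apply Rmult_le_compat; auto using Cmod_ge0.
      eapply Rle_trans; [apply Cmod_sub|]. rewrite Cmod_C1, Cmod_mul, Cmod_pow.
      apply exp_ineq1_le. }
  eapply Rle_trans; [apply Hn|]. apply exp_le.
  assert (0 <= Cmod p ^ n) by (apply pow_le; auto).
  unfold Rdiv. apply Rmult_le_compat_r. left; apply Rinv_0_lt_compat; lra. nra.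
Qed.

Lemma qpoch_part_converges z p : Cmod p < 1 -> exists L, C_cv (qpoch_part z p) L.
Proof.
  intros Hp. assert (Hp0 := Cmod_ge0 p). assert (Hz0 := Cmod_ge0 z).
  apply (cv_geometric_steps _ (exp (Cmod z / (1 - Cmod p)) * Cmod z) (Cmod p)).
  - apply Rmult_le_pos; auto. left; apply exp_pos.
  - lra.
  - intro n. simpl.
    replace (Csub (Cmul (qpoch_part z p n) (Csub C1 (Cmul z (Cpow p n)))) (qpoch_part z p n))
      with (Copp (Cmul (qpoch_part z p n) (Cmul z (Cpow p n)))) by ring.
    rewrite Cmod_opp, !Cmod_mul, Cmod_pow, Rmult_assoc.
    assert (0 <= Cmod p ^ n) by (apply pow_le; auto).
    apply Rmult_le_compat; [apply Cmod_ge0|apply Rmult_le_pos; auto|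
                            apply qpoch_part_bounded; auto|lra].
Qed.

Lemma qpoch_cv z p : Cmod p < 1 -> C_cv (qpoch_part z p) (qpoch z p).
Proof.
  intro Hp. apply (epsilon_spec (inhabits C0) (fun l => C_cv (qpoch_part z p) l)).
  apply qpoch_part_converges; auto.
Qed.

Lemma qpoch_at0 z : qpoch z C0 = Csub C1 z.
Proof.
  apply (cv_unique (qpoch_part z C0)).
  - apply qpoch_cv. rewrite Cmod_C0. lra.
  - apply (cv_ext_ev (fun _ => Csub C1 z) _ _ 1%nat); [|apply cv_const].
    intros n Hn. destruct n; [lia|]. clear Hn. induction n; simpl in *. ring.
    rewrite <- IHn. ring.
Qed.

Definition qfact (p : Cplx) (n : nat) : Cplx := qpoch_part p p n.

Lemma qfact_S p k : qfact p (S k) = Cmul (qfact p k) (Csub C1 (Cmul p (Cpow p k))).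
Proof. reflexivity. Qed.

Lemma qfact_lower_bound p : Cmod p < 1 -> forall n,
  exp (- (Cmod p / ((1 - Cmod p) * (1 - Cmod p)))) <= Cmod (qfact p n).
Proof.
  intros Hp. assert (Hp0 := Cmod_ge0 p). set (r := Cmod p).
  assert (Hr : 0 <= r < 1) by (unfold r; lra).
  assert (Hn : forall n, exp (- ((r - r ^ (S n)) / ((1 - r) * (1 - r)))) <= Cmod (qfact p n)).
  { induction n; unfold qfact in *; simpl.
    - rewrite Cmod_C1. replace ((r - r * 1) / ((1 - r) * (1 - r))) with 0 by (field; lra).
      rewrite Ropp_0, exp_0; lra.
    - rewrite Cmod_mul.
      assert (Hrn : 0 <= r ^ n) by (apply pow_le; lra).
      assert (Hrn1 : r * r ^ n <= r) by (assert (r^n <= 1) by (apply pow_le1; lra); nra).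
      replace (- ((r - r * (r * r ^ n)) / ((1 - r) * (1 - r))))
        with (- ((r - r * r ^ n) / ((1 - r) * (1 - r))) + - (r * r ^ n / (1 - r)))
        by (field; lra).
      rewrite exp_plus. apply Rmult_le_compat; try (left; apply exp_pos); auto.
      assert (E1 : 1 - r * r ^ n <= Cmod (Csub C1 (Cmul p (Cpow p n)))).
      { assert (T := Cmod_rev C1 (Cmul p (Cpow p n))).
        rewrite Cmod_C1, Cmod_mul, Cmod_pow in T. unfold r. lra. }
      eapply Rle_trans; [|apply E1].
      eapply Rle_trans; [|apply exp_le_one_minus; split; [nra|lra]].
      apply exp_le. apply Ropp_le_contravar. unfold Rdiv.
      apply Rmult_le_compat_l; [nra|]. apply Rinv_le_contravar; lra. }
  intro n. eapply Rle_trans; [|apply Hn]. apply exp_le. apply Ropp_le_contravar.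
  unfold Rdiv. apply Rmult_le_compat_r. left; apply Rinv_0_lt_compat; nra.
  assert (0 <= r ^ S n) by (apply pow_le; lra). lra.
Qed.

Lemma qfact_nz p n : Cmod p < 1 -> qfact p n <> C0.
Proof.
  intros Hp E. assert (H := qfact_lower_bound p Hp n). rewrite E, Cmod_C0 in H.
  assert (H2 := exp_pos (- (Cmod p / ((1 - Cmod p) * (1 - Cmod p))))). lra.
Qed.

Lemma qpoch_self_nz p : Cmod p < 1 -> qpoch p p <> C0.
Proof.
  intros Hp E.
  assert (T := cv_norm_lb _ _ _ (qpoch_cv p p Hp) (qfact_lower_bound p Hp)).
  rewrite E, Cmod_C0 in T.
  assert (H2 := exp_pos (- (Cmod p / ((1 - Cmod p) * (1 - Cmod p))))). lra.
Qed.

Lemma qfact_double q n : qfact q (n + n) = Cmul (qpoch_part q (Cmul q q) n) (qfact (Cmul q q) n).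
Proof.
  induction n. unfold qfact; simpl. ring.
  replace (S n + S n)%nat with (S (S (n + n))) by lia.
  rewrite !qfact_S, IHn. unfold qfact. simpl qpoch_part at 2.
  replace (Cpow q (S (n + n))) with (Cmul q (Cpow (Cmul q q) n))
    by (simpl; rewrite Cpow_mul, Cpow_add; reflexivity).
  replace (Cpow q (n + n)) with (Cpow (Cmul q q) n) by (rewrite Cpow_mul, Cpow_add; reflexivity).
  simpl. ring.
Qed.

Lemma qpoch_double q : Cmod q < 1 ->
  qpoch q q = Cmul (qpoch q (Cmul q q)) (qpoch (Cmul q q) (Cmul q q)).
Proof.
  intro Hq. assert (Hq2 := Cmod_lt1_sq q Hq).
  apply (cv_unique (fun n => qfact q (n + n))).
  - apply cv_comp. apply qpoch_cv; auto. intro N. exists N. intros; lia.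
  - apply (cv_ext (fun n => Cmul (qpoch_part q (Cmul q q) n) (qfact (Cmul q q) n))).
    intro; rewrite qfact_double; auto. apply cv_mul; apply qpoch_cv; auto.
Qed.

Fixpoint qbinom (p : Cplx) (N i : nat) : Cplx :=
  match N, i with
  | O, O => C1
  | O, S _ => C0
  | S N', O => C1
  | S N', S i' => Cadd (qbinom p N' (S i')) (Cmul (Cpow p (N' - i')) (qbinom p N' i'))
  end.

Lemma qbinom_0 p N : qbinom p N 0 = C1.
Proof. destruct N; reflexivity. Qed.

Lemma qbinom_out p N i : (i > N)%nat -> qbinom p N i = C0.
Proof.
  revert i; induction N; intros i Hi; destruct i; try lia; simpl; auto.
  rewrite !IHN by lia. ring.
Qed.

Lemma qbinom_diag p N : qbinom p N N = C1.
Proof.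
  induction N; simpl; auto. rewrite qbinom_out by lia. rewrite IHN, Nat.sub_diag. simpl. ring.
Qed.

Lemma qbinom_qfact p N i : (i <= N)%nat ->
  Cmul (Cmul (qbinom p N i) (qfact p i)) (qfact p (N - i)) = qfact p N.
Proof.
  revert i; induction N; intros i Hi.
  - destruct i; [|lia]. simpl. unfold qfact; simpl. ring.
  - destruct i as [|i].
    + simpl qbinom. rewrite Nat.sub_0_r. change (qfact p 0) with C1. ring.
    + destruct (Nat.eq_dec i N) as [->|Hne].
      * simpl qbinom. rewrite qbinom_out by lia. rewrite qbinom_diag, !Nat.sub_diag.
        change (qfact p 0) with C1. simpl Cpow. ring.
      * destruct (Nat.lt_exists_pred 0 (N - i)) as [d [Hd _]]; [lia|].
        assert (H1 := IHN (S i) ltac:(lia)). assert (H2 := IHN i ltac:(lia)).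
        replace (N - S i)%nat with d in H1 by lia. rewrite Hd in H2.
        simpl qbinom. replace (S N - S i)%nat with (S d) by lia. rewrite Hd.
        replace (Cmul (Cmul (Cadd (qbinom p N (S i)) (Cmul (Cpow p (S d)) (qbinom p N i)))
                            (qfact p (S i))) (qfact p (S d)))
          with (Cadd (Cmul (Cmul (Cmul (qbinom p N (S i)) (qfact p (S i))) (qfact p d))
                           (Csub C1 (Cmul p (Cpow p d))))
                     (Cmul (Cmul (Cmul (qbinom p N i) (qfact p i)) (qfact p (S d)))
                           (Cmul (Cpow p (S d)) (Csub C1 (Cmul p (Cpow p i))))))
          by (rewrite !qfact_S; ring).
        rewrite H1, H2, (qfact_S p N).
        replace (Cpow p N) with (Cmul (Cpow p i) (Cpow p (S d)))
          by (rewrite <- Cpow_add; f_equal; lia).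
        simpl Cpow. ring.
Qed.

Lemma qbinom_sym p N i : Cmod p < 1 -> (i <= N)%nat -> qbinom p N i = qbinom p N (N - i).
Proof.
  intros Hp Hi. assert (H1 := qbinom_qfact p N i Hi).
  assert (H2 := qbinom_qfact p N (N - i) ltac:(lia)).
  replace (N - (N - i))%nat with i in H2 by lia.
  assert (Ha := qfact_nz p i Hp). assert (Hb := qfact_nz p (N - i) Hp).
  replace (qbinom p N i) with (Cdiv (qfact p N) (Cmul (qfact p i) (qfact p (N - i))))
    by (rewrite <- H1; field; auto).
  replace (qbinom p N (N - i)) with (Cdiv (qfact p N) (Cmul (qfact p i) (qfact p (N - i))))
    by (rewrite <- H2; field; auto).
  reflexivity.
Qed.

Fixpoint nsum (f : nat -> Cplx) (N : nat) : Cplx :=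
  match N with O => f O | S N' => Cadd (nsum f N') (f (S N')) end.

Lemma nsum_ext f g N : (forall i, (i <= N)%nat -> f i = g i) -> nsum f N = nsum g N.
Proof.
  induction N; intros H; simpl. apply H; lia. rewrite IHN by (intros; apply H; lia).
  rewrite H; auto.
Qed.

Lemma nsum_shift f N : nsum f (S N) = Cadd (f O) (nsum (fun i => f (S i)) N).
Proof. induction N. simpl. ring. simpl in *. rewrite IHN. ring. Qed.

Lemma nsum_add f g N : nsum (fun i => Cadd (f i) (g i)) N = Cadd (nsum f N) (nsum g N).
Proof. induction N; simpl; auto. rewrite IHN. ring. Qed.

Lemma nsum_mulr f c N : nsum (fun i => Cmul (f i) c) N = Cmul (nsum f N) c.
Proof. induction N; simpl; auto. rewrite IHN. ring. Qed.

Lemma nsum_opp f N : nsum (fun i => Copp (f i)) N = Copp (nsum f N).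
Proof. induction N; simpl; auto. rewrite IHN. ring. Qed.

Lemma nsum_rev f N : nsum f N = nsum (fun i => f (N - i)%nat) N.
Proof.
  revert f. induction N; intro f. reflexivity.
  rewrite nsum_shift, (IHN (fun i => f (S i))). simpl nsum at 2. rewrite Nat.sub_diag.
  rewrite (Cring_theory.(Radd_comm) (f 0%nat)). f_equal.
  apply nsum_ext. intros i Hi. f_equal. destruct i; lia.
Qed.

Definition theta_coef (p z : Cplx) (k : Z) : Cplx := Cmul (zpow p (tri k)) (zpow (Copp z) k).

Lemma theta_coef_succ p z k : p <> C0 -> z <> C0 ->
  theta_coef p z (k + 1) = Cmul (Cmul (theta_coef p z k) (zpow p k)) (Copp z).
Proof.
  intros Hp Hz. unfold theta_coef.
  rewrite tri_succ, !zpow_add by (auto; apply Copp_nz; auto). rewrite zpow_1. ring.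
Qed.

Lemma theta_coef_reflect p z k : p <> C0 -> z <> C0 ->
  theta_coef p z (- k) = theta_coef p (Cdiv p z) k.
Proof.
  intros Hp Hz. unfold theta_coef.
  assert (Hpz : Cdiv p z <> C0) by (apply Cdiv_nz; auto).
  assert (Hm1 : Copp C1 <> C0) by apply Copp_nz, C1_nz.
  rewrite tri_opp, (zpow_Copp z), (zpow_Copp (Cdiv p z)), zpow_div, !zpow_add,
    (zpow_opp (Copp C1)), (zpow_opp z k), zpow_m1 by auto.
  assert (zpow p k <> C0) by (apply zpow_nz; auto).
  assert (zpow z k <> C0) by (apply zpow_nz; auto).
  destruct (Z.even k); field; repeat split; auto; apply C1_nz.
Qed.

Definition jtp_sum (p z : Cplx) (n m : nat) : Cplx :=
  nsum (fun i => Cmul (qbinom p (m + n) i) (theta_coef p z (Z.of_nat i - Z.of_nat m))) (m + n).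

Lemma jtp_sum_step p z n m : p <> C0 -> z <> C0 ->
  jtp_sum p z (S n) m = Cmul (jtp_sum p z n m) (Csub C1 (Cmul z (Cpow p n))).
Proof.
  intros Hp Hz. unfold jtp_sum. replace (m + S n)%nat with (S (m + n)) by lia.
  set (N := (m + n)%nat). set (t i := theta_coef p z (Z.of_nat i - Z.of_nat m)).
  (* multiplying a coefficient by z p^n shifts its index by one *)
  assert (Hkey : forall i, (i <= N)%nat ->
            Cmul (Cmul (t i) z) (Cpow p n) = Copp (Cmul (t (S i)) (Cpow p (N - i)))).
  { intros i Hi. unfold t.
    replace (Z.of_nat (S i) - Z.of_nat m)%Z with ((Z.of_nat i - Z.of_nat m) + 1)%Z by lia.
    rewrite theta_coef_succ, <- !zpow_nat by auto.
    replace (Z.of_nat n) with ((Z.of_nat i - Z.of_nat m) + Z.of_nat (N - i))%Z by lia.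
    rewrite zpow_add by auto. ring. }
  change (nsum (fun i => Cmul (qbinom p (S N) i) (t i)) (S N)
          = Cmul (nsum (fun i => Cmul (qbinom p N i) (t i)) N) (Csub C1 (Cmul z (Cpow p n)))).
  rewrite nsum_shift.
  rewrite (nsum_ext _ (fun i => Cadd (Cmul (qbinom p N (S i)) (t (S i)))
                              (Cmul (Cmul (Cpow p (N - i)) (qbinom p N i)) (t (S i))))).
  2:{ intros i Hi. simpl qbinom. ring. }
  rewrite nsum_add.
  assert (E1 : nsum (fun i => Cmul (qbinom p N i) (t i)) N
               = Cadd (Cmul (qbinom p N 0) (t 0%nat))
                      (nsum (fun i => Cmul (qbinom p N (S i)) (t (S i))) N)).
  { rewrite <- (nsum_shift (fun i => Cmul (qbinom p N i) (t i))). simpl nsum at 2.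
    rewrite (qbinom_out p N (S N)) by lia. ring. }
  assert (E2 : nsum (fun i => Cmul (Cmul (qbinom p N i) (t i)) (Cmul z (Cpow p n))) N
               = Copp (nsum (fun i => Cmul (Cmul (Cpow p (N - i)) (qbinom p N i)) (t (S i))) N)).
  { rewrite <- nsum_opp. apply nsum_ext. intros i Hi.
    transitivity (Cmul (qbinom p N i) (Cmul (Cmul (t i) z) (Cpow p n))). ring.
    rewrite Hkey by auto. ring. }
  replace (Cmul (nsum (fun i => Cmul (qbinom p N i) (t i)) N) (Csub C1 (Cmul z (Cpow p n))))
    with (Csub (nsum (fun i => Cmul (qbinom p N i) (t i)) N)
               (nsum (fun i => Cmul (Cmul (qbinom p N i) (t i)) (Cmul z (Cpow p n))) N))
    by (rewrite nsum_mulr; ring).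
  rewrite E1, E2, !qbinom_0. ring.
Qed.

Lemma jtp_sum_factor p z n m : p <> C0 -> z <> C0 ->
  jtp_sum p z n m = Cmul (qpoch_part z p n) (jtp_sum p z 0 m).
Proof.
  intros Hp Hz. induction n. simpl. ring. rewrite jtp_sum_step, IHn by auto. simpl. ring.
Qed.

Lemma jtp_sum_swap p z n m : Cmod p < 1 -> p <> C0 -> z <> C0 ->
  jtp_sum p z n m = jtp_sum p (Cdiv p z) m n.
Proof.
  intros Hp1 Hp Hz. unfold jtp_sum. rewrite nsum_rev, (Nat.add_comm n m).
  apply nsum_ext. intros i Hi.
  rewrite <- qbinom_sym by auto. f_equal.
  replace (Z.of_nat (m + n - i) - Z.of_nat m)%Z with (- (Z.of_nat i - Z.of_nat n))%Z by lia.
  apply theta_coef_reflect; auto.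
Qed.

Lemma finite_jtp p z n m : Cmod p < 1 -> p <> C0 -> z <> C0 ->
  jtp_sum p z n m = Cmul (qpoch_part z p n) (qpoch_part (Cdiv p z) p m).
Proof.
  intros Hp1 Hp Hz. assert (Hpz : Cdiv p z <> C0) by (apply Cdiv_nz; auto).
  rewrite jtp_sum_factor, jtp_sum_swap, jtp_sum_factor by auto.
  unfold jtp_sum, theta_coef. simpl. ring.
Qed.

Section ListSums.
Context {X : Type}.

Definition lsum (f : X -> Cplx) (l : list X) : Cplx :=
  fold_right (fun x s => Cadd (f x) s) C0 l.
Definition rsum (f : X -> R) (l : list X) : R := fold_right (fun x s => f x + s) 0 l.

Lemma lsum_app f l1 l2 : lsum f (l1 ++ l2) = Cadd (lsum f l1) (lsum f l2).
Proof. induction l1; simpl. ring. rewrite IHl1. ring. Qed.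

Lemma lsum_perm f l1 l2 : Permutation l1 l2 -> lsum f l1 = lsum f l2.
Proof. induction 1; simpl. reflexivity. rewrite IHPermutation; reflexivity. ring. congruence. Qed.

Lemma lsum_ext f g l : (forall x, In x l -> f x = g x) -> lsum f l = lsum g l.
Proof. induction l; simpl; intros H; auto. rewrite H, IHl; auto. Qed.

Lemma lsum_add f g l : lsum (fun x => Cadd (f x) (g x)) l = Cadd (lsum f l) (lsum g l).
Proof. induction l; simpl. ring. rewrite IHl. ring. Qed.

Lemma lsum_sub f g l : lsum (fun x => Csub (f x) (g x)) l = Csub (lsum f l) (lsum g l).
Proof. induction l; simpl. ring. rewrite IHl. ring. Qed.

Lemma lsum_mull f c l : lsum (fun x => Cmul c (f x)) l = Cmul c (lsum f l).
Proof. induction l; simpl. ring. rewrite IHl. ring. Qed.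

Lemma lsum_filter f P l : lsum f (filter P l) = lsum (fun x => if P x then f x else C0) l.
Proof. induction l; simpl; auto. destruct (P a); simpl; rewrite IHl; auto. ring. Qed.

Lemma lsum_incl f (P : X -> bool) l1 l2 : NoDup l1 -> NoDup l2 ->
  (forall x, In x l1 <-> In x l2 /\ P x = true) ->
  lsum f l1 = lsum (fun x => if P x then f x else C0) l2.
Proof.
  intros H1 H2 H. rewrite <- lsum_filter. apply lsum_perm. apply NoDup_Permutation; auto.
  apply NoDup_filter; auto. intro x. rewrite filter_In. apply H.
Qed.

Lemma Cmod_lsum f l : Cmod (lsum f l) <= rsum (fun x => Cmod (f x)) l.
Proof.
  induction l; simpl. rewrite Cmod_C0; lra.
  eapply Rle_trans; [apply Cmod_tri|]. lra.
Qed.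

Lemma rsum_app f l1 l2 : rsum f (l1 ++ l2) = rsum f l1 + rsum f l2.
Proof. induction l1; simpl. ring. rewrite IHl1. ring. Qed.

Lemma rsum_ext f g l : (forall x, In x l -> f x = g x) -> rsum f l = rsum g l.
Proof. induction l; simpl; intros H; auto. rewrite H, IHl; auto. Qed.

Lemma rsum_le f g l : (forall x, In x l -> f x <= g x) -> rsum f l <= rsum g l.
Proof. induction l; simpl; intros H. lra. apply Rplus_le_compat; auto. Qed.

Lemma rsum_perm f l1 l2 : Permutation l1 l2 -> rsum f l1 = rsum f l2.
Proof. induction 1; simpl. reflexivity. rewrite IHPermutation; reflexivity. ring. congruence. Qed.

Lemma rsum_scal f c l : rsum (fun x => c * f x) l = c * rsum f l.
Proof. induction l; simpl. ring. rewrite IHl. ring. Qed.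

Lemma rsum_plus f g l : rsum (fun x => f x + g x) l = rsum f l + rsum g l.
Proof. induction l; simpl. ring. rewrite IHl. ring. Qed.

Lemma rsum_filter f P l : (forall x, 0 <= f x) -> rsum f (filter P l) <= rsum f l.
Proof.
  intros H. induction l; simpl. lra. destruct (P a); simpl. lra. specialize (H a). lra.
Qed.

Lemma rsum_filter_eq f P l : rsum f (filter P l) = rsum (fun x => if P x then f x else 0) l.
Proof. induction l; simpl; auto. destruct (P a); simpl; rewrite IHl; auto. ring. Qed.

End ListSums.

Lemma lsum_map {X Y} (f : Y -> Cplx) (g : X -> Y) l : lsum f (map g l) = lsum (fun x => f (g x)) l.
Proof. induction l; simpl; auto. rewrite IHl; auto. Qed.

Lemma rsum_map {X Y} (f : Y -> R) (g : X -> Y) l : rsum f (map g l) = rsum (fun x => f (g x)) l.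
Proof. induction l; simpl; auto. rewrite IHl; auto. Qed.

Lemma lsum_prod {X Y} (f : X -> Cplx) (g : Y -> Cplx) l1 l2 :
  Cmul (lsum f l1) (lsum g l2) = lsum (fun x => Cmul (f (fst x)) (g (snd x))) (list_prod l1 l2).
Proof.
  induction l1; simpl. ring. rewrite lsum_app, lsum_map, <- IHl1. simpl.
  rewrite lsum_mull. ring.
Qed.

Lemma rsum_prod {X Y} (f : X -> R) (g : Y -> R) l1 l2 :
  rsum f l1 * rsum g l2 = rsum (fun x => f (fst x) * g (snd x)) (list_prod l1 l2).
Proof.
  induction l1; simpl. ring. rewrite rsum_app, rsum_map, <- IHl1. simpl.
  rewrite rsum_scal. ring.
Qed.

Lemma NoDup_prod {X Y} (l1 : list X) (l2 : list Y) :
  NoDup l1 -> NoDup l2 -> NoDup (list_prod l1 l2).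
Proof.
  intros H1 H2. induction H1; simpl. constructor.
  apply NoDup_app; auto.
  - apply FinFun.Injective_map_NoDup; auto. intros u v E. injection E; auto.
  - intros [u v] Hin Hin2. apply in_map_iff in Hin. destruct Hin as [w [E _]].
    injection E; intros; subst. apply in_prod_iff in Hin2. tauto.
Qed.

Lemma nsum_seq f N : nsum f N = lsum f (seq 0 (S N)).
Proof.
  induction N. simpl. ring. simpl nsum. rewrite (seq_S (S N)), lsum_app, <- IHN. simpl. ring.
Qed.

Fixpoint zrange (n : nat) : list Z :=
  match n with
  | O => 0%Z :: nil
  | S n' => Z.of_nat (S n') :: (- Z.of_nat (S n'))%Z :: zrange n'
  end.

Lemma zrange_In n k : In k (zrange n) <-> (Z.abs k <= Z.of_nat n)%Z.
Proof.
  induction n; simpl.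
  - split. intros [H|[]]; subst; simpl; lia. intro; left; lia.
  - rewrite IHn. split. intros [H|[H|H]]; lia.
    intro H. destruct (Z.eq_dec k (Z.of_nat (S n))). left; auto.
    destruct (Z.eq_dec k (- Z.of_nat (S n))). right; left; auto. right; right; lia.
Qed.

Lemma zrange_NoDup n : NoDup (zrange n).
Proof.
  induction n; simpl. constructor; auto. constructor.
  constructor. intros [H|H]. lia. apply zrange_In in H. lia.
  constructor. intros H. apply zrange_In in H. lia. auto.
Qed.

Lemma nsum_zrange (F : Z -> Cplx) n :
  nsum (fun i => F (Z.of_nat i - Z.of_nat n)%Z) (n + n) = lsum F (zrange n).
Proof.
  rewrite nsum_seq, <- (lsum_map F (fun i => (Z.of_nat i - Z.of_nat n)%Z)).
  apply lsum_perm. apply NoDup_Permutation.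
  - apply FinFun.Injective_map_NoDup. intros u v E; lia. apply seq_NoDup.
  - apply zrange_NoDup.
  - intro k. rewrite zrange_In, in_map_iff. split.
    + intros [i [E Hi]]. apply in_seq in Hi. lia.
    + intros H. exists (Z.to_nat (k + Z.of_nat n)). split. lia. apply in_seq. lia.
Qed.

Definition box (n : nat) : list (Z * Z) := list_prod (zrange n) (zrange n).

Lemma box_In n x :
  In x (box n) <-> (Z.abs (fst x) <= Z.of_nat n /\ Z.abs (snd x) <= Z.of_nat n)%Z.
Proof. destruct x; unfold box. rewrite in_prod_iff, !zrange_In. simpl. tauto. Qed.

Lemma box_NoDup n : NoDup (box n).
Proof. apply NoDup_prod; apply zrange_NoDup. Qed.

Definition in_boxb (K : nat) (x : Z * Z) : bool :=
  andb (Z.abs (fst x) <=? Z.of_nat K)%Z (Z.abs (snd x) <=? Z.of_nat K)%Z.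

Lemma in_boxb_spec K x : in_boxb K x = true <-> In x (box K).
Proof. rewrite box_In. unfold in_boxb. rewrite andb_true_iff, !Z.leb_le. tauto. Qed.

Definition size1 (x : Z * Z) : nat := (Z.abs_nat (fst x) + Z.abs_nat (snd x))%nat.

Lemma rsum_zrange_half N : rsum (fun k => (/2) ^ (Z.abs_nat k)) (zrange N) = 3 - 2 * (/2) ^ N.
Proof.
  induction N; simpl. lra.
  rewrite IHN, SuccNat2Pos.id_succ. simpl. field.
Qed.

Lemma rsum_box_half N : rsum (fun x => (/2) ^ (size1 x)) (box N) <= 9.
Proof.
  unfold box.
  rewrite (rsum_ext _ (fun x => (/2) ^ (Z.abs_nat (fst x)) * (/2) ^ (Z.abs_nat (snd x)))).
  2:{ intros x _. unfold size1. apply pow_add. }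
  rewrite <- (rsum_prod (fun k => (/2) ^ (Z.abs_nat k)) (fun k => (/2) ^ (Z.abs_nat k))),
    rsum_zrange_half.
  assert (0 <= (/2)^N <= 1) by (split; [apply pow_le; lra|apply pow_le1; lra]). nra.
Qed.

Lemma rsum_cv0 {X} (e : nat -> X -> Cplx) l : (forall x, C_cv (fun n => e n x) C0) ->
  forall eps, eps > 0 -> exists N, forall n, (n >= N)%nat -> rsum (fun x => Cmod (e n x)) l < eps.
Proof.
  intros H. induction l; intros eps He; simpl.
  - exists O. intros; lra.
  - destruct (IHl (eps/2)) as [N1 H1]; [lra|]. destruct (H a (eps/2)) as [N2 H2]; [lra|].
    exists (N1 + N2)%nat. intros n Hn. specialize (H1 n ltac:(lia)). specialize (H2 n ltac:(lia)).
    replace (Csub (e n a) C0) with (e n a) in H2 by ring. lra.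
Qed.

Lemma box_head_bound (g : Z * Z -> R) K L : (forall x, 0 <= g x) ->
  rsum (fun x => if in_boxb K x then g x else 0) (box L) <= rsum g (box K).
Proof.
  intros Hg. rewrite <- rsum_filter_eq.
  rewrite (rsum_perm g _ (filter (in_boxb L) (box K))).
  - apply rsum_filter; auto.
  - apply NoDup_Permutation; try (apply NoDup_filter, box_NoDup).
    intro x. rewrite !filter_In, !in_boxb_spec. tauto.
Qed.

Lemma box_tail_bound (g : Z * Z -> R) C K L : 0 <= C ->
  (forall x, 0 <= g x <= C * (/4) ^ (size1 x)) ->
  rsum (fun x => if in_boxb K x then 0 else g x) (box L) <= 9 * C * (/2) ^ K.
Proof.
  intros HC Hg. assert (H2K : 0 <= (/2) ^ K) by (apply pow_le; lra).
  apply Rle_trans with (C * (/2) ^ K * rsum (fun x => (/2) ^ (size1 x)) (box L)).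
  - rewrite <- rsum_scal. apply rsum_le. intros x _.
    assert (Hs : 0 <= (/2) ^ (size1 x)) by (apply pow_le; lra).
    destruct (in_boxb K x) eqn:Ex.
    { assert (0 <= C * (/2) ^ K) by nra. apply Rmult_le_pos; auto. }
    assert (Ha : (size1 x >= K)%nat).
    { unfold in_boxb in Ex. apply andb_false_iff in Ex. unfold size1.
      destruct Ex as [Ex|Ex]; apply Z.leb_gt in Ex; lia. }
    assert (E4 : (/4) ^ (size1 x) = (/2) ^ (size1 x) * (/2) ^ (size1 x)).
    { rewrite <- Rpow_mult_distr. f_equal. field. }
    assert (E5 : (/2) ^ (size1 x) <= (/2) ^ K).
    { replace (size1 x) with (K + (size1 x - K))%nat by lia. rewrite pow_add.
      assert ((/2)^(size1 x - K) <= 1) by (apply pow_le1; lra). nra. }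
    specialize (Hg x). rewrite E4 in Hg. cbv beta iota.
    assert (C * (/2) ^ size1 x * (/2) ^ size1 x <= C * (/2) ^ size1 x * (/2) ^ K)
      by (apply Rmult_le_compat_l; nra).
    nra.
  - assert (P := rsum_box_half L). assert (0 <= C * (/2) ^ K) by nra. nra.
Qed.

Lemma box_split_bound (g : Z * Z -> R) C K L : 0 <= C ->
  (forall x, 0 <= g x <= C * (/4) ^ (size1 x)) ->
  rsum g (box L) <= rsum g (box K) + 9 * C * (/2) ^ K.
Proof.
  intros HC Hg.
  rewrite (rsum_ext g (fun x => (if in_boxb K x then g x else 0) +
                                 (if in_boxb K x then 0 else g x))).
  2:{ intros x _. destruct (in_boxb K x); ring. }
  rewrite rsum_plus.
  assert (Hhead := box_head_bound g K L (fun x => proj1 (Hg x))).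
  assert (Htail := box_tail_bound g C K L HC Hg).
  lra.
Qed.

Lemma half_pow_small A eps : 0 <= A -> 0 < eps -> exists K, A * (/2) ^ K < eps.
Proof.
  intros HA He.
  destruct (pow_lt_1_zero (/2) ltac:(rewrite Rabs_pos_eq; lra) (eps / (A + 1))) as [K HK].
  { apply Rdiv_lt_0_compat; lra. }
  exists K. specialize (HK K (Nat.le_refl _)). rewrite Rabs_pos_eq in HK by (apply pow_le; lra).
  assert (0 <= (/2) ^ K) by (apply pow_le; lra).
  apply Rle_lt_trans with ((A + 1) * (/2) ^ K); [nra|].
  apply Rmult_lt_reg_r with (/ (A + 1)); [apply Rinv_0_lt_compat; lra|].
  replace ((A + 1) * (/ 2) ^ K * / (A + 1)) with ((/2) ^ K) by (field; lra). auto.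
Qed.

Lemma box_dominated_cv (W : Z * Z -> Cplx) (e : nat -> Z * Z -> Cplx) (C Eb : R) (s : nat -> nat) :
  0 <= C -> 0 <= Eb ->
  (forall x, Cmod (W x) <= C * (/4) ^ (size1 x)) ->
  (forall n x, Cmod (e n x) <= Eb) ->
  (forall x, C_cv (fun n => e n x) C0) ->
  C_cv (fun n => lsum (fun x => Cmul (W x) (e n x)) (box (s n))) C0.
Proof.
  intros HC HE HW He Hcv eps Heps.
  assert (HCE : 0 <= C * Eb) by nra.
  (* first choose the box K outside of which the terms are negligible ... *)
  destruct (half_pow_small (9 * (C * Eb)) (eps / 2)) as [K HK]; [lra|lra|].
  (* ... then the rank N after which the finitely many terms in box K are small *)
  destruct (rsum_cv0 e (box K) Hcv (eps / (2 * (C + 1)))) as [N HN].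
  { apply Rdiv_lt_0_compat; lra. }
  exists N. intros n Hn.
  replace (Csub (lsum (fun x => Cmul (W x) (e n x)) (box (s n))) C0)
    with (lsum (fun x => Cmul (W x) (e n x)) (box (s n))) by ring.
  eapply Rle_lt_trans; [apply Cmod_lsum|].
  set (g := fun x => Cmod (Cmul (W x) (e n x))).
  assert (Hg : forall x, 0 <= g x <= C * Eb * (/4) ^ (size1 x)).
  { intro x. unfold g. rewrite Cmod_mul. specialize (HW x). specialize (He n x).
    assert (0 <= (/4) ^ (size1 x)) by (apply pow_le; lra).
    assert (0 <= Cmod (W x)) by apply Cmod_ge0. assert (0 <= Cmod (e n x)) by apply Cmod_ge0.
    split. nra. replace (C * Eb * (/4) ^ size1 x) with (C * (/4) ^ size1 x * Eb) by ring.
    apply Rmult_le_compat; auto. }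
  assert (Hsplit := box_split_bound g (C * Eb) K (s n) HCE Hg).
  assert (Hhead : rsum g (box K) <= C * rsum (fun x => Cmod (e n x)) (box K)).
  { rewrite <- rsum_scal. apply rsum_le. intros x _. unfold g. rewrite Cmod_mul.
    apply Rmult_le_compat_r; [apply Cmod_ge0|]. eapply Rle_trans; [apply HW|].
    assert ((/4)^(size1 x) <= 1) by (apply pow_le1; lra). nra. }
  specialize (HN n Hn).
  assert (Q1 : C * rsum (fun x => Cmod (e n x)) (box K) < eps / 2).
  { apply Rle_lt_trans with (C * (eps / (2 * (C + 1)))).
    - apply Rmult_le_compat_l; lra.
    - apply Rmult_lt_reg_r with (2 * (C + 1)); [lra|]. field_simplify; [|lra]. nra. }
  lra.
Qed.

Definition tn (n : nat) : nat := Z.to_nat (tri (Z.of_nat n)).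

Lemma tn_S n : tn (S n) = (tn n + n)%nat.
Proof.
  unfold tn. rewrite Nat2Z.inj_succ, <- Z.add_1_r, tri_succ.
  assert (H := tri_ge0 (Z.of_nat n)). lia.
Qed.

(* r^T(n) g^n = prod_(i<n) r^i g is bounded, since its factors are
   eventually at most 1. *)
Lemma tri_geom_bounded r g : 0 <= r < 1 -> 0 <= g ->
  exists M, 0 <= M /\ forall n, r ^ (tn n) * g ^ n <= M.
Proof.
  intros Hr Hg.
  destruct (pow_lt_1_zero r ltac:(rewrite Rabs_pos_eq; lra) (/ (g + 1))) as [I HI].
  { apply Rinv_0_lt_compat; lra. }
  assert (HrI : forall n, (n >= I)%nat -> r ^ n * g <= 1).
  { intros n Hn. specialize (HI n Hn). rewrite Rabs_pos_eq in HI by (apply pow_le; lra).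
    assert (0 <= r ^ n) by (apply pow_le; lra).
    apply Rmult_lt_compat_r with (r := g + 1) in HI; [|lra].
    rewrite Rinv_l in HI by lra. nra. }
  set (m := Rmax 1 g). assert (Hm1 : 1 <= m) by apply Rmax_l. assert (Hmg : g <= m) by apply Rmax_r.
  assert (Hc : forall n, r ^ (tn n) * g ^ n <= m ^ (Nat.min n I)).
  { induction n.
    - unfold tn. simpl. lra.
    - rewrite tn_S, pow_add.
      replace (r ^ tn n * r ^ n * g ^ S n) with ((r ^ tn n * g ^ n) * (r ^ n * g)) by (simpl; ring).
      assert (0 <= r ^ tn n * g ^ n) by (apply Rmult_le_pos; apply pow_le; lra).
      assert (0 <= r ^ n) by (apply pow_le; lra).
      destruct (le_lt_dec I n).
      + replace (Nat.min (S n) I) with (Nat.min n I) by lia.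
        assert (r ^ n * g <= 1) by (apply HrI; lia). nra.
      + replace (Nat.min (S n) I) with (S (Nat.min n I)) by lia. simpl pow.
        assert (r ^ n <= 1) by (apply pow_le1; lra).
        assert (r ^ n * g <= m) by nra. assert (0 <= r ^ n * g) by nra. nra. }
  exists (m ^ I). split. apply pow_le; lra.
  intro n. eapply Rle_trans; [apply Hc|]. apply Rle_pow; auto. lia.
Qed.

Lemma tri_geom_decay r x : 0 <= r < 1 -> 0 <= x ->
  exists M, 0 <= M /\ forall n, r ^ (tn n) * x ^ n <= M * (/4) ^ n.
Proof.
  intros Hr Hx. destruct (tri_geom_bounded r (4 * x) Hr ltac:(lra)) as [M [HM H]].
  exists M. split; auto. intro n. specialize (H n).
  assert (H4 : 0 < (/4) ^ n) by (apply pow_lt; lra).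
  assert (E : (4 * x) ^ n * (/4) ^ n = x ^ n).
  { rewrite <- Rpow_mult_distr. f_equal. field. }
  replace (r ^ tn n * x ^ n) with (r ^ tn n * (4 * x) ^ n * (/4) ^ n) by (rewrite <- E; ring).
  apply Rmult_le_compat_r; lra.
Qed.

Lemma Cmod_theta_coef_nat p z n : p <> C0 -> z <> C0 ->
  Cmod (theta_coef p z (Z.of_nat n)) = Cmod p ^ (tn n) * Cmod z ^ n.
Proof.
  intros Hp Hz. unfold theta_coef.
  rewrite Cmod_mul, !Cmod_zpow, Cmod_opp by (auto; apply Copp_nz; auto).
  unfold tn. rewrite !pow_powerRZ, Z2Nat.id by apply tri_ge0. reflexivity.
Qed.

Lemma theta_coef_bound p z : Cmod p < 1 -> p <> C0 -> z <> C0 ->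
  exists C, 0 <= C /\ forall k, Cmod (theta_coef p z k) <= C * (/4) ^ (Z.abs_nat k).
Proof.
  intros Hp1 Hp Hz. assert (Hr : 0 <= Cmod p < 1) by (split; [apply Cmod_ge0|auto]).
  assert (Hpz : Cdiv p z <> C0) by (apply Cdiv_nz; auto).
  destruct (tri_geom_decay (Cmod p) (Cmod z) Hr (Cmod_ge0 z)) as [M1 [HM1 H1]].
  destruct (tri_geom_decay (Cmod p) (Cmod (Cdiv p z)) Hr (Cmod_ge0 _)) as [M2 [HM2 H2]].
  exists (M1 + M2). split. lra. intro k.
  assert (0 <= (/4) ^ Z.abs_nat k) by (apply pow_le; lra).
  destruct (Z_le_gt_dec 0 k) as [Hk|Hk].
  - replace k with (Z.of_nat (Z.to_nat k)) by lia.
    rewrite Cmod_theta_coef_nat, Zabs2Nat.id by auto. specialize (H1 (Z.to_nat k)).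
    replace (Z.abs_nat k) with (Z.to_nat k) in * by lia. nra.
  - (* negative indices: reflect k -> -k, z -> p/z *)
    replace k with (- Z.of_nat (Z.to_nat (- k)))%Z by lia.
    rewrite theta_coef_reflect, Cmod_theta_coef_nat by auto.
    replace (Z.abs_nat (- Z.of_nat (Z.to_nat (- k)))) with (Z.to_nat (- k)) by lia.
    specialize (H2 (Z.to_nat (- k))).
    replace (Z.abs_nat k) with (Z.to_nat (- k)) in * by lia. nra.
Qed.

Lemma theta_pair_bound p z1 z2 : Cmod p < 1 -> p <> C0 -> z1 <> C0 -> z2 <> C0 ->
  exists C, 0 <= C /\ forall x : Z * Z,
    Cmod (Cmul (theta_coef p z1 (fst x)) (theta_coef p z2 (snd x))) <= C * (/4) ^ (size1 x).
Proof.
  intros Hp1 Hp H1 H2. destruct (theta_coef_bound p z1 Hp1 Hp H1) as [C1 [HC1 B1]].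
  destruct (theta_coef_bound p z2 Hp1 Hp H2) as [C2 [HC2 B2]].
  exists (C1 * C2). split. nra. intro x. rewrite Cmod_mul. unfold size1. rewrite pow_add.
  specialize (B1 (fst x)). specialize (B2 (snd x)).
  apply Rle_trans with ((C1 * (/ 4) ^ Z.abs_nat (fst x)) * (C2 * (/ 4) ^ Z.abs_nat (snd x))).
  - apply Rmult_le_compat; auto using Cmod_ge0.
  - right; ring.
Qed.

Definition cqbinom (p : Cplx) (n : nat) (k : Z) : Cplx :=
  if (Z.abs k <=? Z.of_nat n)%Z then qbinom p (n + n) (Z.to_nat (k + Z.of_nat n)) else C0.

Lemma finite_jtp_centred p z n : Cmod p < 1 -> p <> C0 -> z <> C0 ->
  Cmul (qpoch_part z p n) (qpoch_part (Cdiv p z) p n)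
  = lsum (fun k => Cmul (cqbinom p n k) (theta_coef p z k)) (zrange n).
Proof.
  intros Hp1 Hp Hz. rewrite <- finite_jtp by auto. unfold jtp_sum.
  rewrite <- (nsum_zrange (fun k => Cmul (cqbinom p n k) (theta_coef p z k))).
  apply nsum_ext. intros i Hi. unfold cqbinom.
  replace (Z.abs (Z.of_nat i - Z.of_nat n) <=? Z.of_nat n)%Z with true
    by (symmetry; apply Z.leb_le; lia).
  replace (Z.to_nat (Z.of_nat i - Z.of_nat n + Z.of_nat n)) with i by lia. reflexivity.
Qed.

Lemma cqbinom_eq p n k : Cmod p < 1 -> (Z.abs k <= Z.of_nat n)%Z ->
  cqbinom p n k = Cdiv (qfact p (n + n))
    (Cmul (qfact p (Z.to_nat (Z.of_nat n + k))) (qfact p (Z.to_nat (Z.of_nat n - k)))).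
Proof.
  intros Hp Hk. unfold cqbinom.
  replace (Z.abs k <=? Z.of_nat n)%Z with true by (symmetry; apply Z.leb_le; lia).
  assert (H := qbinom_qfact p (n + n) (Z.to_nat (k + Z.of_nat n)) ltac:(lia)).
  replace (n + n - Z.to_nat (k + Z.of_nat n))%nat with (Z.to_nat (Z.of_nat n - k)) in H by lia.
  replace (Z.to_nat (Z.of_nat n + k)) with (Z.to_nat (k + Z.of_nat n)) by lia.
  rewrite <- H. field. split; apply qfact_nz; auto.
Qed.

Lemma cqbinom_bound p : Cmod p < 1 ->
  exists B, 0 <= B /\ forall n k, Cmod (cqbinom p n k) <= B.
Proof.
  intros Hp. set (M := exp (Cmod p / (1 - Cmod p))).
  set (d := exp (- (Cmod p / ((1 - Cmod p) * (1 - Cmod p))))).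
  assert (Hd : 0 < d) by apply exp_pos. assert (HM : 0 < M) by apply exp_pos.
  exists (M / (d * d)). split. left; apply Rdiv_lt_0_compat; nra.
  intros n k. destruct (Z_le_gt_dec (Z.abs k) (Z.of_nat n)).
  - rewrite cqbinom_eq by auto. unfold Cdiv.
    rewrite Cmod_mul, Cmod_inv, Cmod_mul by (apply Cmul_nz; apply qfact_nz; auto).
    assert (A1 := qpoch_part_bounded p p (n + n) Hp). fold M in A1.
    assert (A2 := qfact_lower_bound p Hp (Z.to_nat (Z.of_nat n + k))).
    assert (A3 := qfact_lower_bound p Hp (Z.to_nat (Z.of_nat n - k))).
    fold d in A2, A3. unfold qfact in *.
    set (x := Cmod (qpoch_part p p (n + n))) in *.
    set (y := Cmod (qpoch_part p p (Z.to_nat (Z.of_nat n + k)))) in *.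
    set (w := Cmod (qpoch_part p p (Z.to_nat (Z.of_nat n - k)))) in *.
    assert (0 <= x) by apply Cmod_ge0.
    assert (d * d <= y * w) by nra.
    unfold Rdiv. apply Rmult_le_compat; auto. left; apply Rinv_0_lt_compat; nra.
    apply Rinv_le_contravar; nra.
  - unfold cqbinom. replace (Z.abs k <=? Z.of_nat n)%Z with false
      by (symmetry; apply Z.leb_gt; lia).
    rewrite Cmod_C0. left; apply Rdiv_lt_0_compat; nra.
Qed.

(* For fixed k, [2n, n+k]_p -> (p;p)_oo / (p;p)_oo^2 = 1/(p;p)_oo. *)
Lemma cqbinom_lim p k : Cmod p < 1 -> C_cv (fun n => cqbinom p n k) (Cinv (qpoch p p)).
Proof.
  intros Hp. set (P := qpoch p p).
  assert (HP : C_cv (qfact p) P) by (apply qpoch_cv; auto).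
  assert (HP0 : P <> C0) by (apply qpoch_self_nz; auto).
  assert (Hshift : forall j, C_cv (fun n => qfact p (Z.to_nat (Z.of_nat n + j))) P).
  { intro j. apply cv_comp; auto. intro N. exists (N + Z.to_nat (Z.abs j))%nat. intros n Hn. lia. }
  apply (cv_ext_ev (fun n => Cdiv (qfact p (n + n))
          (Cmul (qfact p (Z.to_nat (Z.of_nat n + k))) (qfact p (Z.to_nat (Z.of_nat n + - k)))))
          _ _ (Z.to_nat (Z.abs k))).
  { intros n Hn. rewrite cqbinom_eq by (auto; lia). repeat f_equal. }
  replace (Cinv P) with (Cdiv P (Cmul P P)) by (field; auto).
  apply cv_mul.
  - apply cv_comp; auto. intro N. exists N. intros; lia.
  - apply cv_inv. apply Cmul_nz; auto. apply cv_mul; apply Hshift.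
Qed.

Definition theta_pair (p z1 z2 : Cplx) (x : Z * Z) : Cplx :=
  Cmul (theta_coef p z1 (fst x)) (theta_coef p z2 (snd x)).

Lemma cqbinom_box_cv p W : Cmod p < 1 ->
  (exists C, 0 <= C /\ forall x, Cmod (W x) <= C * (/4) ^ (size1 x)) ->
  C_cv (fun n => Csub (Cmul (Cmul (qpoch p p) (qpoch p p))
                         (lsum (fun x => Cmul (Cmul (cqbinom p n (fst x)) (cqbinom p n (snd x))) (W x))
                               (box n)))
                      (lsum W (box n))) C0.
Proof.
  intros Hp [C [HC HW]]. set (P := qpoch p p).
  assert (HP0 : P <> C0) by (apply qpoch_self_nz; auto).
  assert (HP : 0 <= Cmod P * Cmod P) by (assert (0 <= Cmod P) by apply Cmod_ge0; nra).
  destruct (cqbinom_bound p Hp) as [B [HB0 HB]].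
  apply (cv_ext (fun n => lsum (fun x => Cmul (W x)
           (Csub (Cmul (Cmul P P) (Cmul (cqbinom p n (fst x)) (cqbinom p n (snd x)))) C1)) (box n))).
  { intro n. rewrite <- lsum_mull, <- lsum_sub. apply lsum_ext. intros; ring. }
  apply (box_dominated_cv W _ C (Cmod P * Cmod P * (B * B) + 1) (fun n => n)); auto.
  - assert (0 <= B * B) by nra. nra.
  - intros n x. eapply Rle_trans; [apply Cmod_sub|]. rewrite Cmod_C1, !Cmod_mul.
    assert (Cmod (cqbinom p n (fst x)) * Cmod (cqbinom p n (snd x)) <= B * B)
      by (apply Rmult_le_compat; auto using Cmod_ge0).
    assert (Cmod P * Cmod P * (Cmod (cqbinom p n (fst x)) * Cmod (cqbinom p n (snd x)))
            <= Cmod P * Cmod P * (B * B)) by (apply Rmult_le_compat_l; auto).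
    lra.
  - intro x. replace C0 with (Csub (Cmul (Cmul P P) (Cmul (Cinv P) (Cinv P))) C1) by (field; auto).
    apply cv_sub; [|apply cv_const]. apply cv_mul; [apply cv_const|].
    apply cv_mul; apply cqbinom_lim; auto.
Qed.

Lemma theta_pair_box_cv p z1 z2 : Cmod p < 1 -> p <> C0 -> z1 <> C0 -> z2 <> C0 ->
  C_cv (fun n => lsum (theta_pair p z1 z2) (box n))
       (Cmul (Cmul (qpoch p p) (qpoch p p)) (Cmul (theta z1 p) (theta z2 p))).
Proof.
  intros Hp1 Hp H1 H2. set (PP := Cmul (qpoch p p) (qpoch p p)).
  apply (cv_of_close (fun n => Cmul PP (Cmul
           (Cmul (qpoch_part z1 p n) (qpoch_part (Cdiv p z1) p n))
           (Cmul (qpoch_part z2 p n) (qpoch_part (Cdiv p z2) p n))))).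
  - apply cv_mul; [apply cv_const|]. unfold theta.
    apply cv_mul; apply cv_mul; apply qpoch_cv; auto.
  - apply (cv_ext (fun n => Csub (Cmul PP (lsum (fun x =>
             Cmul (Cmul (cqbinom p n (fst x)) (cqbinom p n (snd x))) (theta_pair p z1 z2 x)) (box n)))
             (lsum (theta_pair p z1 z2) (box n)))).
    { intro n. rewrite !finite_jtp_centred, lsum_prod by auto. unfold box, theta_pair.
      do 2 f_equal. apply lsum_ext. intros. ring. }
    apply cqbinom_box_cv; auto. apply theta_pair_bound; auto.
Qed.

(* The left side of (K) is a box limit of the terms
   w_pair = theta_pair q b (-c) + theta_pair q (-b) c, the right side one of
   v_pair = theta_pair q^2 (bc) (bq/c).  Under (m,l) |-> (m+l, m-l), w_pair
   becomes 2 v_pair, and w_pair vanishes at points with j + k odd. *)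

Definition w_pair (q b c : Cplx) (x : Z * Z) : Cplx :=
  Cadd (theta_pair q b (Copp c) x) (theta_pair q (Copp b) c x).
Definition v_pair (q b c : Cplx) (x : Z * Z) : Cplx :=
  theta_pair (Cmul q q) (Cmul b c) (Cdiv (Cmul b q) c) x.
Definition diag (y : Z * Z) : Z * Z := ((fst y + snd y)%Z, (fst y - snd y)%Z).

Lemma w_pair_odd q b c x : b <> C0 -> c <> C0 -> Z.even (fst x + snd x) = false ->
  w_pair q b c x = C0.
Proof.
  intros Hb Hc H. destruct x as [j k]; simpl in *. unfold w_pair, theta_pair, theta_coef; simpl.
  replace (Copp (Copp c)) with c by ring. replace (Copp (Copp b)) with b by ring.
  rewrite (zpow_Copp b), (zpow_Copp c) by auto. rewrite !zpow_m1.
  rewrite Z.even_add in H. destruct (Z.even j), (Z.even k); simpl in H; try discriminate; ring.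
Qed.

Lemma w_pair_diag q b c y : q <> C0 -> b <> C0 -> c <> C0 ->
  w_pair q b c (diag y) = Cmul (Cadd C1 C1) (v_pair q b c y).
Proof.
  intros Hq Hb Hc. destruct y as [m l].
  unfold w_pair, v_pair, theta_pair, diag, theta_coef; simpl.
  replace (Copp (Copp c)) with c by ring. replace (Copp (Copp b)) with b by ring.
  assert (Hbc : Cmul b c <> C0) by (apply Cmul_nz; auto).
  assert (Hbq : Cmul b q <> C0) by (apply Cmul_nz; auto).
  assert (Hbqc : Cdiv (Cmul b q) c <> C0) by (apply Cdiv_nz; auto).
  rewrite (zpow_Copp b), (zpow_Copp c), (zpow_Copp (Cmul b c)),
    (zpow_Copp (Cdiv (Cmul b q) c)) by auto.
  rewrite !zpow_sq, zpow_div, !zpow_mul by auto.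
  rewrite tri_plus, tri_minus.
  replace (m - l)%Z with (m + - l)%Z by lia.
  replace (2 * tri m)%Z with (tri m + tri m)%Z by lia.
  replace (2 * tri l)%Z with (tri l + tri l)%Z by lia.
  rewrite !zpow_m1, !Z.even_add, !Z.even_opp, !zpow_add by auto.
  rewrite (zpow_opp q (m * l)) by auto.
  assert (zpow q (m * l) <> C0) by (apply zpow_nz; auto).
  destruct (Z.even m), (Z.even l); simpl; field; auto.
Qed.

(* The image of box n under diag: even points of l1-size at most 2n. *)
Definition in_diamondb (n : nat) (x : Z * Z) : bool :=
  andb (Z.even (fst x + snd x)) (Z.abs (fst x) + Z.abs (snd x) <=? Z.of_nat (n + n))%Z.

Lemma diag_In n x : In x (map diag (box n)) <-> In x (box (n + n)) /\ in_diamondb n x = true.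
Proof.
  rewrite in_map_iff, box_In. unfold in_diamondb. rewrite andb_true_iff, Z.leb_le, Z.even_spec.
  split.
  - intros [[m l] [E Hin]]. apply box_In in Hin. unfold diag in E. cbn [fst snd] in *.
    subst x. cbn [fst snd]. split; [lia|]. split; [|lia]. exists m. ring.
  - intros [_ [[h Hh] Hd]]. destruct x as [j k]; cbn [fst snd] in *.
    exists (h, (j - h)%Z). unfold diag; simpl. split. f_equal; lia.
    apply box_In. simpl. lia.
Qed.

Lemma diag_NoDup n : NoDup (map diag (box n)).
Proof.
  apply FinFun.Injective_map_NoDup; [|apply box_NoDup].
  intros [m l] [m' l'] E. unfold diag in E; simpl in E. injection E; intros. f_equal; lia.
Qed.

Lemma box_sub n x : In x (box n) <-> In x (box (n + n)) /\ in_boxb n x = true.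
Proof. rewrite in_boxb_spec, !box_In. lia. Qed.

Lemma w_pair_bound q b c : Cmod q < 1 -> q <> C0 -> b <> C0 -> c <> C0 ->
  exists C, 0 <= C /\ forall x, Cmod (w_pair q b c x) <= C * (/4) ^ (size1 x).
Proof.
  intros Hq1 Hq Hb Hc.
  destruct (theta_pair_bound q b (Copp c) Hq1 Hq Hb (Copp_nz c Hc)) as [C1 [HC1 B1]].
  destruct (theta_pair_bound q (Copp b) c Hq1 Hq (Copp_nz b Hb) Hc) as [C2 [HC2 B2]].
  exists (C1 + C2). split. lra. intro x. unfold w_pair. eapply Rle_trans; [apply Cmod_tri|].
  specialize (B1 x). specialize (B2 x). unfold theta_pair. lra.
Qed.

(* Both box sums have the same limit: their difference is a sum of w_pair
   over the even points of box 2n lying in exactly one of box n and the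
   diamond diag (box n), all of which have l1-size > n. *)
Lemma box_diamond_cv q b c : Cmod q < 1 -> q <> C0 -> b <> C0 -> c <> C0 ->
  C_cv (fun n => Csub (lsum (w_pair q b c) (box n))
                      (Cmul (Cadd C1 C1) (lsum (v_pair q b c) (box n)))) C0.
Proof.
  intros Hq1 Hq Hb Hc.
  set (e := fun (n : nat) (x : Z * Z) =>
    if Z.even (fst x + snd x)
    then Csub (if in_boxb n x then C1 else C0) (if in_diamondb n x then C1 else C0) else C0).
  apply (cv_ext (fun n => lsum (fun x => Cmul (w_pair q b c x) (e n x)) (box (n + n)))).
  { intro n. rewrite <- lsum_mull.
    rewrite (lsum_ext (fun y => Cmul (Cadd C1 C1) (v_pair q b c y)) (fun y => w_pair q b c (diag y)))
      by (intros; rewrite w_pair_diag; auto).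
    rewrite <- (lsum_map (w_pair q b c) diag).
    rewrite (lsum_incl (w_pair q b c) (in_diamondb n) (map diag (box n)) (box (n + n)));
      auto using diag_NoDup, box_NoDup, diag_In.
    rewrite (lsum_incl (w_pair q b c) (in_boxb n) (box n) (box (n + n)));
      auto using box_NoDup, box_sub.
    rewrite <- lsum_sub. symmetry. apply lsum_ext. intros x _. unfold e.
    destruct (Z.even (fst x + snd x)) eqn:Ev.
    - destruct (in_boxb n x), (in_diamondb n x); ring.
    - rewrite w_pair_odd by auto. destruct (in_boxb n x), (in_diamondb n x); ring. }
  destruct (w_pair_bound q b c Hq1 Hq Hb Hc) as [C [HC HW]].
  apply (box_dominated_cv _ e C 2 (fun n => (n + n)%nat)); try lra; auto.
  - intros n x. unfold e. destruct (Z.even (fst x + snd x)).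
    + eapply Rle_trans; [apply Cmod_sub|].
      destruct (in_boxb n x), (in_diamondb n x); rewrite ?Cmod_C1, ?Cmod_C0; lra.
    + rewrite Cmod_C0; lra.
  - intro x. apply (cv_ext_ev (fun _ => C0) _ _ (Z.to_nat (Z.abs (fst x) + Z.abs (snd x)))).
    2: apply cv_const.
    intros n Hn. unfold e. destruct (Z.even (fst x + snd x)) eqn:Ev; auto.
    replace (in_boxb n x) with true. replace (in_diamondb n x) with true. ring.
    + unfold in_diamondb. rewrite Ev. simpl. symmetry. apply Z.leb_le. lia.
    + unfold in_boxb. symmetry. apply andb_true_iff. rewrite !Z.leb_le. lia.
Qed.

Lemma relation_K q b c : Cmod q < 1 -> q <> C0 -> b <> C0 -> c <> C0 ->
  Cmul (Cmul (qpoch q (Cmul q q)) (qpoch q (Cmul q q)))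
       (Cadd (Cmul (theta b q) (theta (Copp c) q)) (Cmul (theta (Copp b) q) (theta c q)))
  = Cmul (Cadd C1 C1)
         (Cmul (theta (Cmul b c) (Cmul q q)) (theta (Cdiv (Cmul b q) c) (Cmul q q))).
Proof.
  intros Hq1 Hq Hb Hc.
  assert (Hq21 := Cmod_lt1_sq q Hq1). assert (Hq2 : Cmul q q <> C0) by (apply Cmul_nz; auto).
  set (Q := qpoch q (Cmul q q)). set (P2 := qpoch (Cmul q q) (Cmul q q)).
  assert (HP2 : P2 <> C0) by (apply qpoch_self_nz; auto).
  assert (Hw : C_cv (fun n => lsum (w_pair q b c) (box n))
             (Cmul (Cmul (qpoch q q) (qpoch q q))
                   (Cadd (Cmul (theta b q) (theta (Copp c) q)) (Cmul (theta (Copp b) q) (theta c q))))).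
  { apply (cv_ext (fun n => Cadd (lsum (theta_pair q b (Copp c)) (box n))
                                 (lsum (theta_pair q (Copp b) c) (box n)))).
    { intro n. rewrite <- lsum_add. reflexivity. }
    replace (Cmul (Cmul (qpoch q q) (qpoch q q)) _)
      with (Cadd (Cmul (Cmul (qpoch q q) (qpoch q q)) (Cmul (theta b q) (theta (Copp c) q)))
                 (Cmul (Cmul (qpoch q q) (qpoch q q)) (Cmul (theta (Copp b) q) (theta c q))))
      by ring.
    apply cv_add; apply theta_pair_box_cv; auto using Copp_nz. }
  assert (Hv : C_cv (fun n => Cmul (Cadd C1 C1) (lsum (v_pair q b c) (box n)))
             (Cmul (Cadd C1 C1) (Cmul (Cmul P2 P2)
                (Cmul (theta (Cmul b c) (Cmul q q)) (theta (Cdiv (Cmul b q) c) (Cmul q q)))))).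
  { apply cv_mul; [apply cv_const|]. apply theta_pair_box_cv; auto.
    apply Cmul_nz; auto. apply Cdiv_nz; auto. apply Cmul_nz; auto. }
  assert (EQ := cv_eq_of_diff _ _ _ _ Hw Hv (box_diamond_cv q b c Hq1 Hq Hb Hc)).
  (* (q;q)_oo = (q;q^2)_oo (q^2;q^2)_oo; cancel (q^2;q^2)_oo^2 *)
  rewrite qpoch_double in EQ by auto. fold Q P2 in EQ.
  apply (f_equal (fun t => Cdiv t (Cmul P2 P2))) in EQ.
  replace (Cmul (Cmul Q Q) _) with (Cdiv (Cmul (Cmul (Cmul Q P2) (Cmul Q P2))
       (Cadd (Cmul (theta b q) (theta (Copp c) q)) (Cmul (theta (Copp b) q) (theta c q))))
       (Cmul P2 P2)) by (field; auto).
  rewrite EQ. field. auto.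
Qed.

(* The theorem: for q = 0 both sides are polynomial in a, b, c; otherwise
   substitute (K) for the three pairs and simplify. *)

Theorem mainTheorem12 (q a b c : Cplx) :
  Cmod q < 1 -> a <> C0 -> b <> C0 -> c <> C0 ->
  let q2 := Cmul q q in
  Cmul (Cmul (qpoch q q2) (qpoch q q2))
    (Cadd (Cadd (Cmul (Cmul (theta a q) (theta b q)) (theta (Copp c) q))
                (Cmul (Cmul (theta a q) (theta (Copp b) q)) (theta c q)))
          (Cmul (Cmul (theta (Copp a) q) (theta b q)) (theta c q)))
  =
  Cadd (Cadd
    (Cmul (Cmul (qpoch a q) (qpoch (Cdiv q a) q))
          (Cmul (theta (Cmul b c) q2) (theta (Cdiv (Cmul b q) c) q2)))
    (Cmul (Cmul (qpoch b q) (qpoch (Cdiv q b) q))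
          (Cmul (theta (Cmul a c) q2) (theta (Cdiv (Cmul a q) c) q2))))
    (Cmul (Cmul (qpoch c q) (qpoch (Cdiv q c) q))
          (Cmul (theta (Cmul a b) q2) (theta (Cdiv (Cmul a q) b) q2))).
Proof.
  intros Hq1 Ha Hb Hc q2. subst q2.
  destruct (classic (q = C0)) as [Hq|Hq].
  - subst q. replace (Cmul C0 C0) with C0 by ring. unfold theta. rewrite !qpoch_at0.
    unfold Cdiv. ring.
  - assert (Kbc := relation_K q b c Hq1 Hq Hb Hc).
    assert (Kac := relation_K q a c Hq1 Hq Ha Hc).
    assert (Kab := relation_K q a b Hq1 Hq Ha Hb).
    change (Cmul (qpoch a q) (qpoch (Cdiv q a) q)) with (theta a q).
    change (Cmul (qpoch b q) (qpoch (Cdiv q b) q)) with (theta b q).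
    change (Cmul (qpoch c q) (qpoch (Cdiv q c) q)) with (theta c q).
    set (Q := qpoch q (Cmul q q)) in *.
    assert (solve2 : forall x y, x = Cmul (Cadd C1 C1) y -> y = Cdiv x (Cadd C1 C1))
      by (intros x y ->; field; apply two_nz).
    rewrite (solve2 _ _ Kbc), (solve2 _ _ Kac), (solve2 _ _ Kab). field. apply two_nz.
Qed.
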